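(* Let $t\mapsto f_t$ be a $C^1$ family of piecewise expanding $C^1$ unimodal maps such that $f_0$ is good and $J(f_0,\partial_tf_t|_{t=0})\neq0$. (A) If the critical point of $f_0$ is periodic, then there exists a sequence of parameters $t_n\to0$ such that the critical point of $f_{t_n}$ is not periodic. (B) If the critical point of $f_0$ is not periodic, then there exists a sequence of parameters $t_n\to0$ such that the critical point of $f_{t_n}$ is periodic.
   Context: Let $I=[-1,1]$ and $c=0$ (the critical point). $\mathcal B^1(I)$ is the Banach space of continuous $f:I\to\mathbb R$ that are $C^1$ on $[-1,0]$ and on $[0,1]$ with $f(1)=f(-1)$, normed by $|f|_1=\max\{|f|_{C^1[-1,0]},|f|_{C^1[0,1]}\}$. A piecewise expanding $C^1$ unimodal map is an $f\in\mathcal B^1(I)$ with $f(-1)=f(1)=-1$, $\inf_{x\in[-1,0]}Df(x)>1$, $\sup_{x\in[0,1]}Df(x)<-1$ and $f(0)\le1$; the set of these is $\mathcal U^1$. A $C^1$ family of such maps is a $C^1$ map $t\mapsto f_t$ from an interval around $0$ into $\mathcal U^1\subset\mathcal B^1(I)$. $f$ is good if either $c$ is not periodic, or $c$ has prime period $p\ge2$ and $|Df^{p-1}(f(c))|\min\{|Df^+(c)|,|Df^-(c)|\}>2$ ($Df^\pm(c)$ one-sided derivatives at $c$). For bounded $v:I\to\mathbb R$: if $c$ is not periodic for $f$, $J(f,v)=\sum_{i=0}^\infty \frac{v(f^i(c))}{Df^i(f(c))}$; if $c$ has prime period $p$, $J(f,v)=\sum_{i=0}^{p-1}\frac{v(f^i(c))}{Df^i(f(c))}$.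 *)

From Stdlib Require Import Reals ClassicalEpsilon.
From Coquelicot Require Import Coquelicot.
Open Scope R_scope.

(* Maps are modelled as functions R -> R; only their values on I = [-1,1] matter. *)

Definition is_hderiv (f : R -> R) (a b x l : R) : Prop :=
  filterlim (fun y => (f y - f x) / (y - x))
    (within (fun y => a <= y <= b /\ y <> x) (locally x)) (locally l).

(** The derivative of [f|[a,b]] at [x] (unique when it exists, a < b). *)
Definition hD (f : R -> R) (a b x : R) : R :=
  epsilon (inhabits 0) (is_hderiv f a b x).

Definition C1_on (f : R -> R) (a b : R) : Prop :=
  forall x, a <= x <= b ->
    (exists l, is_hderiv f a b x l) /\
    filterlim (hD f a b) (within (fun y => a <= y <= b) (locally x))
      (locally (hD f a b x)).

Definition Dm (f : R -> R) (x : R) : R := hD f (-1) 0 x.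
Definition Dp (f : R -> R) (x : R) : R := hD f 0 1 x.

Definition B1 (f : R -> R) : Prop :=
  (forall x, -1 <= x <= 1 ->
     filterlim f (within (fun y => -1 <= y <= 1) (locally x)) (locally (f x))) /\
  C1_on f (-1) 0 /\ C1_on f 0 1 /\ f 1 = f (-1).

Definition B1norm_le (h : R -> R) (eps : R) : Prop :=
  (forall x, -1 <= x <= 0 -> Rabs (h x) <= eps /\ Rabs (Dm h x) <= eps) /\
  (forall x, 0 <= x <= 1 -> Rabs (h x) <= eps /\ Rabs (Dp h x) <= eps).

Definition U1 (f : R -> R) : Prop :=
  B1 f /\ f (-1) = -1 /\ f 1 = -1 /\
  (exists lam, lam > 1 /\ forall x, -1 <= x <= 0 -> Dm f x >= lam) /\
  (exists lam, lam < -1 /\ forall x, 0 <= x <= 1 -> Dp f x <= lam) /\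
  f 0 <= 1.

Definition C1_family (F G : R -> R -> R) (delta : R) : Prop :=
  0 < delta /\
  (forall t, Rabs t < delta -> U1 (F t)) /\
  (forall t, Rabs t < delta -> B1 (G t)) /\
  (forall t, Rabs t < delta -> forall eps, eps > 0 -> exists eta, eta > 0 /\
     forall h, h <> 0 -> Rabs h < eta -> Rabs (t + h) < delta ->
       B1norm_le (fun x => (F (t + h) x - F t x) / h - G t x) eps) /\
  (forall t, Rabs t < delta -> forall eps, eps > 0 -> exists eta, eta > 0 /\
     forall s, Rabs s < delta -> Rabs (s - t) < eta ->
       B1norm_le (fun x => G s x - G t x) eps).

(** Dynamics of the critical point c = 0. *)
Definition periodic (f : R -> R) : Prop :=
  exists p : nat, (1 <= p)%nat /\ Nat.iter p f 0 = 0.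

Definition prime_period (f : R -> R) (p : nat) : Prop :=
  (1 <= p)%nat /\ Nat.iter p f 0 = 0 /\
  forall q : nat, (1 <= q)%nat -> (q < p)%nat -> Nat.iter q f 0 <> 0.

(** Df: derivative of f away from c (one-sided at +-1); the value at c is
    never used below. *)
Definition Df (f : R -> R) (x : R) : R :=
  if Rle_dec x 0 then Dm f x else Dp f x.

(** Df^n(y) = prod_{j<n} Df(f^j(y))  (chain rule for the iterate). *)
Fixpoint Dfn (f : R -> R) (n : nat) (y : R) : R :=
  match n with
  | O => 1
  | S k => Dfn f k y * Df f (Nat.iter k f y)
  end.

Definition good (f : R -> R) : Prop :=
  ~ periodic f \/
  exists p : nat, prime_period f p /\ (2 <= p)%nat /\
    Rabs (Dfn f (p - 1) (f 0)) * Rmin (Rabs (Dp f 0)) (Rabs (Dm f 0)) > 2.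

Fixpoint sumR (n : nat) (g : nat -> R) : R :=
  match n with
  | O => 0
  | S k => sumR k g + g k
  end.

Definition Jterm (f v : R -> R) (i : nat) : R :=
  v (Nat.iter i f 0) / Dfn f i (f 0).

Definition J (f v : R -> R) : R :=
  if excluded_middle_informative (periodic f)
  then sumR (epsilon (inhabits 0%nat) (prime_period f)) (Jterm f v)
  else Series (Jterm f v).

From Pilot Require Import Defs.
From Stdlib Require Import Reals.
From Coquelicot Require Import Coquelicot.
From Stdlib Require Import Lra Lia ClassicalEpsilon Classical FunctionalExtensionality.
Open Scope R_scope.

(* Write x_n(t) = f_t^n(c) for the critical orbit.  As long as x_1(t), ..., x_n(t) avoid c,
   the chain rule gives
     d/dt x_{n+1}(t) = Df_t^n(f_t c) * sum_{i <= n} v_t(x_i(t)) / Df_t^i(f_t c),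
   i.e. an exponentially growing factor times a partial sum of J(f_t, v_t), v_t = d/dt f_t.
   (B) If c is not periodic for f_0, these partial sums stay close to J(f_0, v_0) <> 0 for
   small t, uniformly in n.  If c were not periodic for all t in [e/2, e], x_{n+1} would be
   differentiable there with derivative much larger than 4/e for large n, which is
   impossible since x_{n+1} takes values in [-1, 1].
   (A) If c has prime period p and f_0 is good, then for small t and any prime period r of
   c under f_t, the sum of the first r terms of J(f_t, v_t) is nonzero: the orbit of f_t
   shadows that of f_0 in blocks of length p, each block contributes about J(f_0, v_0) <> 0
   divided by the derivative accumulated so far, and goodness makes this derivative grow by a
   factor > 2 per block.  So the derivative of x_n does not vanish where c has prime period n,
   x_n cannot vanish on an interval, and nested intervals on which more and more iterates
   avoid c shrink to a parameter at which c is not periodic. *)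

Lemma ball_R (x y e : R) : ball x e y <-> Rabs (y - x) < e.
Proof. reflexivity. Qed.

Lemma filterlim_within_eps (g : R -> R) (D : R -> Prop) x l :
  filterlim g (within D (locally x)) (locally l) <->
  (forall e, e > 0 -> exists d, d > 0 /\
     forall y, D y -> Rabs (y - x) < d -> Rabs (g y - l) < e).
Proof.
  rewrite filterlim_locally. split.
  - intros H e He. destruct (H (mkposreal e He)) as [d Hd].
    exists d. split; [apply cond_pos|]. intros y Dy Hy. now apply Hd.
  - intros H [e He]. destruct (H e He) as [d [Hd H']].
    exists (mkposreal d Hd). intros y Hy Dy. now apply H'.
Qed.

Lemma Rabs_sub_triang a b c : Rabs (a - c) <= Rabs (a - b) + Rabs (b - c).
Proof. exact (R_dist_tri a c b). Qed.

Lemma is_hderiv_eps f a b x l :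
  is_hderiv f a b x l <->
  (forall e, e > 0 -> exists d, d > 0 /\ forall y, a <= y <= b -> y <> x ->
     Rabs (y - x) < d -> Rabs ((f y - f x) / (y - x) - l) < e).
Proof.
  unfold is_hderiv. rewrite filterlim_within_eps. split.
  - intros H e He. destruct (H e He) as [d [Hd H']].
    exists d; split; [exact Hd|]. intros y Hy Hyx. now apply H'.
  - intros H e He. destruct (H e He) as [d [Hd H']].
    exists d; split; [exact Hd|]. intros y [Hy Hyx]. now apply H'.
Qed.

Lemma is_hderiv_unique f a b x l1 l2 : a < b -> a <= x <= b ->
  is_hderiv f a b x l1 -> is_hderiv f a b x l2 -> l1 = l2.
Proof.
  intros Hab Hx H1 H2. rewrite is_hderiv_eps in H1, H2.
  apply NNPP. intro NE.
  set (e := Rabs (l1 - l2) / 2).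
  assert (He : e > 0) by (apply Rdiv_lt_0_compat; [apply Rabs_pos_lt|]; lra).
  destruct (H1 e He) as [d1 [Hd1 K1]]. destruct (H2 e He) as [d2 [Hd2 K2]].
  set (s := Rmin (Rmin d1 d2) (b - a) / 2).
  assert (Hs : 0 < s < Rmin d1 d2 /\ s <= (b - a) / 2).
  { assert (0 < Rmin (Rmin d1 d2) (b - a)) by (repeat apply Rmin_pos; lra).
    pose proof (Rmin_l (Rmin d1 d2) (b - a)). pose proof (Rmin_r (Rmin d1 d2) (b - a)).
    unfold s; lra. }
  pose proof (Rmin_l d1 d2). pose proof (Rmin_r d1 d2).
  assert (Hy : exists y, a <= y <= b /\ y <> x /\ Rabs (y - x) = s).
  { destruct (Rle_dec (x + s) b).
    - exists (x + s). split; [lra|]. split; [lra|]. rewrite Rabs_right; lra.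
    - exists (x - s). split; [lra|]. split; [lra|]. rewrite Rabs_left; lra. }
  destruct Hy as [y [Hy [Hyx Hys]]].
  specialize (K1 y Hy Hyx ltac:(lra)). specialize (K2 y Hy Hyx ltac:(lra)).
  pose proof (Rabs_sub_triang l1 ((f y - f x) / (y - x)) l2).
  rewrite (Rabs_minus_sym l1 ((f y - f x) / (y - x))) in H3. unfold e in *. lra.
Qed.

Lemma hD_spec f a b x : (exists l, is_hderiv f a b x l) -> is_hderiv f a b x (hD f a b x).
Proof. intros H. unfold hD. now apply epsilon_spec. Qed.

Lemma hD_eq f a b x l : a < b -> a <= x <= b -> is_hderiv f a b x l -> hD f a b x = l.
Proof. intros Hab Hx H. eapply is_hderiv_unique; eauto. apply hD_spec. eauto. Qed.

Lemma is_hderiv_lin f g a b x l1 l2 al be :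
  is_hderiv f a b x l1 -> is_hderiv g a b x l2 ->
  is_hderiv (fun y => al * f y + be * g y) a b x (al * l1 + be * l2).
Proof.
  rewrite !is_hderiv_eps. intros H1 H2 e He.
  set (K := Rabs al + Rabs be + 1).
  assert (HK : K > 0) by (pose proof (Rabs_pos al); pose proof (Rabs_pos be); unfold K; lra).
  destruct (H1 (e / K)) as [d1 [Hd1 K1]]; [apply Rdiv_lt_0_compat; lra|].
  destruct (H2 (e / K)) as [d2 [Hd2 K2]]; [apply Rdiv_lt_0_compat; lra|].
  exists (Rmin d1 d2). split; [now apply Rmin_pos|].
  intros y Hy Hyx Hd.
  specialize (K1 y Hy Hyx (Rlt_le_trans _ _ _ Hd (Rmin_l _ _))).
  specialize (K2 y Hy Hyx (Rlt_le_trans _ _ _ Hd (Rmin_r _ _))).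
  replace ((al * f y + be * g y - (al * f x + be * g x)) / (y - x) - (al * l1 + be * l2))
    with (al * ((f y - f x) / (y - x) - l1) + be * ((g y - g x) / (y - x) - l2))
    by (field; lra).
  eapply Rle_lt_trans; [apply Rabs_triang|]. rewrite !Rabs_mult.
  apply Rle_lt_trans with ((Rabs al + Rabs be) * (e / K)).
  - rewrite Rmult_plus_distr_r.
    apply Rplus_le_compat; apply Rmult_le_compat_l; try apply Rabs_pos; lra.
  - assert (HeK : e / K > 0) by (apply Rdiv_lt_0_compat; lra).
    apply Rlt_le_trans with (K * (e / K)); [apply Rmult_lt_compat_r; [exact HeK|unfold K; lra]|].
    right; field; lra.
Qed.

Lemma is_hderiv_opp f a b x l :
  is_hderiv f a b x l -> is_hderiv (fun y => - f y) a b x (- l).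
Proof.
  intros H. pose proof (is_hderiv_lin f f a b x l l (-1) 0 H H) as K.
  replace (-1 * l + 0 * l) with (- l) in K by ring.
  replace (fun y => - f y) with (fun y => -1 * f y + 0 * f y); [exact K|].
  apply functional_extensionality. intros y. ring.
Qed.

Lemma is_hderiv_little_o f a b x l : is_hderiv f a b x l ->
  forall e, e > 0 -> exists d, d > 0 /\ forall y, a <= y <= b -> Rabs (y - x) < d ->
    Rabs (f y - f x - l * (y - x)) <= e * Rabs (y - x).
Proof.
  rewrite is_hderiv_eps. intros H e He. destruct (H e He) as [d [Hd K]].
  exists d. split; [exact Hd|]. intros y Hy Hyd.
  destruct (Req_dec y x) as [->|NE]; [rewrite !Rminus_eq_0, Rmult_0_r, Rminus_0_r, Rabs_R0; lra|].
  replace (f y - f x - l * (y - x)) with (((f y - f x) / (y - x) - l) * (y - x))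
    by (field; lra).
  rewrite Rabs_mult. apply Rmult_le_compat_r; [apply Rabs_pos|].
  apply Rlt_le, K; assumption.
Qed.

Lemma is_hderiv_continuous f a b x l : is_hderiv f a b x l ->
  forall e, e > 0 -> exists d, d > 0 /\
    forall y, a <= y <= b -> Rabs (y - x) < d -> Rabs (f y - f x) < e.
Proof.
  intros H e He. destruct (is_hderiv_little_o f a b x l H 1 ltac:(lra)) as [d1 [Hd1 K]].
  set (L := Rabs l + 1).
  assert (HL : L > 0) by (pose proof (Rabs_pos l); unfold L; lra).
  exists (Rmin d1 (e / L)). split; [apply Rmin_pos; [|apply Rdiv_lt_0_compat]; lra|].
  intros y Hy Hd. specialize (K y Hy (Rlt_le_trans _ _ _ Hd (Rmin_l _ _))).
  assert (Hyx : L * Rabs (y - x) < e).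
  { apply Rlt_le_trans with (L * (e / L)); [|right; field; lra].
    apply Rmult_lt_compat_l; [exact HL|exact (Rlt_le_trans _ _ _ Hd (Rmin_r _ _))]. }
  pose proof (Rabs_triang (f y - f x - l * (y - x)) (l * (y - x))).
  rewrite Rabs_mult in H0. replace (f y - f x - l * (y - x) + l * (y - x)) with (f y - f x) in H0
    by ring.
  unfold L in Hyx. nra.
Qed.

Lemma is_hderiv_interior f a b x l :
  a < x < b -> is_hderiv f a b x l -> derivable_pt_lim f x l.
Proof.
  rewrite is_hderiv_eps. intros Hx H e He.
  destruct (H e He) as [d [Hd K]].
  set (r := Rmin d (Rmin (x - a) (b - x))).
  assert (Hr : 0 < r) by (repeat apply Rmin_pos; lra).
  exists (mkposreal r Hr). intros h Hh Hlt. simpl in Hlt.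
  pose proof (Rmin_l d (Rmin (x - a) (b - x))). pose proof (Rmin_r d (Rmin (x - a) (b - x))).
  pose proof (Rmin_l (x - a) (b - x)). pose proof (Rmin_r (x - a) (b - x)).
  apply Rabs_def2 in Hlt as Hh'.
  specialize (K (x + h)). replace (x + h - x) with h in K by ring.
  apply K; unfold r in *; lra.
Qed.

Lemma incr_ge_of_hderiv_ge f d a b m : a < b ->
  (forall x, a <= x <= b -> is_hderiv f a b x (d x)) ->
  (forall x, a <= x <= b -> m <= d x) ->
  forall x y, a <= x -> x <= y -> y <= b -> m * (y - x) <= f y - f x.
Proof.
  intros Hab Hd Hm x y Hx Hxy Hy.
  destruct (Req_dec x y) as [<-|NE]; [lra|].
  apply Rle_plus_epsilon. intros e He.
  set (M := 6 * (Rabs m + 1)).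
  assert (HM : M > 0) by (pose proof (Rabs_pos m); unfold M; lra).
  destruct (is_hderiv_continuous f a b x (d x) (Hd x ltac:(lra)) (e / 3) ltac:(lra))
    as [d1 [Hd1 K1]].
  destruct (is_hderiv_continuous f a b y (d y) (Hd y ltac:(lra)) (e / 3) ltac:(lra))
    as [d2 [Hd2 K2]].
  (* the mean value theorem is applied on the interior [[x + s, y - s]];
     the endpoints are controlled by continuity *)
  set (s := Rmin (Rmin d1 d2) (Rmin ((y - x) / 3) (e / M)) / 2).
  assert (Hs : 0 < s /\ s < d1 /\ s < d2 /\ s < (y - x) / 3 /\ s < e / M).
  { assert (0 < e / M) by (apply Rdiv_lt_0_compat; lra).
    assert (0 < Rmin (Rmin d1 d2) (Rmin ((y - x) / 3) (e / M))) by (repeat apply Rmin_pos; lra).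
    pose proof (Rmin_l (Rmin d1 d2) (Rmin ((y - x) / 3) (e / M))).
    pose proof (Rmin_r (Rmin d1 d2) (Rmin ((y - x) / 3) (e / M))).
    pose proof (Rmin_l d1 d2). pose proof (Rmin_r d1 d2).
    pose proof (Rmin_l ((y - x) / 3) (e / M)). pose proof (Rmin_r ((y - x) / 3) (e / M)).
    unfold s; lra. }
  destruct (MVT_cor2 f d (x + s) (y - s)) as [c [Hc Hc']]; [lra| |].
  { intros c Hc. apply (is_hderiv_interior f a b); [lra|apply Hd; lra]. }
  assert (E1 : Rabs (f (x + s) - f x) < e / 3) by (apply K1; [lra|rewrite Rabs_right; lra]).
  assert (E2 : Rabs (f (y - s) - f y) < e / 3) by (apply K2; [lra|rewrite Rabs_left; lra]).
  assert (Hmid : m * (y - s - (x + s)) <= f (y - s) - f (x + s)).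
  { rewrite Hc. apply Rmult_le_compat_r; [lra|apply Hm; lra]. }
  assert (Hms : Rabs (m * (2 * s)) <= e / 3).
  { rewrite Rabs_mult, (Rabs_right (2 * s)) by lra.
    apply Rle_trans with ((Rabs m + 1) * (2 * (e / M))).
    - apply Rmult_le_compat; try apply Rabs_pos; lra.
    - right. unfold M. field. pose proof (Rabs_pos m); lra. }
  apply Rabs_def2 in E1. apply Rabs_def2 in E2. apply Rabs_le_between in Hms.
  nra.
Qed.

Lemma incr_le_of_hderiv_le f d a b M : a < b ->
  (forall x, a <= x <= b -> is_hderiv f a b x (d x)) ->
  (forall x, a <= x <= b -> d x <= M) ->
  forall x y, a <= x -> x <= y -> y <= b -> f y - f x <= M * (y - x).
Proof.
  intros Hab Hd HM x y Hx Hxy Hy.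
  enough (- M * (y - x) <= - f y - - f x) by lra.
  apply (incr_ge_of_hderiv_ge (fun z => - f z) (fun z => - d z) a b); auto.
  - intros z Hz. now apply is_hderiv_opp, Hd.
  - intros z Hz. specialize (HM z Hz). lra.
Qed.

Definition cont_on (g : R -> R) (a b : R) : Prop :=
  forall x, a <= x <= b ->
    filterlim g (within (fun y => a <= y <= b) (locally x)) (locally (g x)).

Lemma cont_on_eps g a b x : cont_on g a b -> a <= x <= b ->
  forall e, e > 0 -> exists d, d > 0 /\
    forall y, a <= y <= b -> Rabs (y - x) < d -> Rabs (g y - g x) < e.
Proof. intros H Hx. exact (proj1 (filterlim_within_eps _ _ _ _) (H x Hx)). Qed.

Lemma cont_on_bounded g a b : a <= b -> cont_on g a b ->
  exists M, forall x, a <= x <= b -> Rabs (g x) <= M.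
Proof.
  intros Hab Hc.
  (* extend [g] constantly outside [[a,b]] to use the extreme value theorem *)
  set (h := fun x => g (Rmax a (Rmin x b))).
  assert (Eh : forall x, a <= x <= b -> h x = g x).
  { intros x Hx. unfold h. now rewrite Rmin_left, Rmax_right by lra. }
  assert (Hh : forall c, a <= c <= b -> continuity_pt h c).
  { intros c Hcab e He. destruct (cont_on_eps g a b c Hc Hcab e He) as [d [Hd K]].
    exists d. split; [exact Hd|]. intros x [_ Hx]. simpl in *. unfold R_dist in *.
    rewrite (Eh c Hcab). unfold h. apply K.
    - split; [apply Rmax_l|]. apply Rmax_lub; [lra|apply Rmin_r].
    - unfold Rmax, Rmin. destruct (Rle_dec x b); destruct (Rle_dec a _);
        apply Rabs_def2 in Hx; apply Rabs_def1; lra. }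
  destruct (continuity_ab_maj h a b Hab Hh) as [M1 [HM1 _]].
  destruct (continuity_ab_min h a b Hab Hh) as [M2 [HM2 _]].
  exists (Rabs (h M1) + Rabs (h M2)). intros x Hx.
  rewrite <- (Eh x Hx). specialize (HM1 x Hx). specialize (HM2 x Hx).
  apply Rabs_le. pose proof (Rle_abs (h M1)). pose proof (Rle_abs (- h M2)).
  rewrite Rabs_Ropp in *. pose proof (Rabs_pos (h M1)). pose proof (Rabs_pos (h M2)). lra.
Qed.

(* The epsilon form of [filterlim f Fi (locally l)]; it combines more easily with division. *)
Definition tends_to {T} (Fi : (T -> Prop) -> Prop) (f : T -> R) (l : R) : Prop :=
  forall e, e > 0 -> Fi (fun x => Rabs (f x - l) < e).

Section TendsTo.
Context {T : Type} {Fi : (T -> Prop) -> Prop} {FF : Filter Fi}.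

Lemma tends_to_const c : tends_to Fi (fun _ => c) c.
Proof. intros e He. apply filter_forall. intros _. rewrite Rminus_eq_0, Rabs_R0. lra. Qed.

Lemma tends_to_ext f g l :
  Fi (fun x => f x = g x) -> tends_to Fi f l -> tends_to Fi g l.
Proof.
  intros E H e He. eapply filter_imp; [|exact (filter_and _ _ E (H e He))].
  intros x [<- Hx]. exact Hx.
Qed.

Lemma tends_to_plus f g a b :
  tends_to Fi f a -> tends_to Fi g b -> tends_to Fi (fun x => f x + g x) (a + b).
Proof.
  intros Hf Hg e He.
  eapply filter_imp; [|apply filter_and; [exact (Hf (e / 2) ltac:(lra))|exact (Hg (e / 2) ltac:(lra))]].
  intros x [E1 E2]. replace (f x + g x - (a + b)) with ((f x - a) + (g x - b)) by ring.
  eapply Rle_lt_trans; [apply Rabs_triang|lra].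
Qed.

Lemma tends_to_mult f g a b :
  tends_to Fi f a -> tends_to Fi g b -> tends_to Fi (fun x => f x * g x) (a * b).
Proof.
  intros Hf Hg e He.
  set (K := Rabs a + Rabs b + 2).
  assert (HK : K > 0) by (pose proof (Rabs_pos a); pose proof (Rabs_pos b); unfold K; lra).
  set (e' := Rmin 1 (e / (4 * K))).
  assert (He' : 0 < e' <= 1 /\ e' <= e / (4 * K)).
  { split; [split|]; [apply Rmin_pos; [|apply Rdiv_lt_0_compat]|apply Rmin_l|apply Rmin_r];
      lra. }
  eapply filter_imp; [|apply filter_and; [exact (Hf e' ltac:(lra))|exact (Hg e' ltac:(lra))]].
  intros x [E1 E2].
  replace (f x * g x - a * b) with ((f x - a) * g x + a * (g x - b)) by ring.
  eapply Rle_lt_trans; [apply Rabs_triang|]. rewrite !Rabs_mult.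
  assert (Hgx : Rabs (g x) <= Rabs b + 1).
  { pose proof (Rabs_sub_triang (g x) b 0). rewrite !Rminus_0_r in H. lra. }
  assert (Rabs (f x - a) * Rabs (g x) <= e' * K).
  { apply Rmult_le_compat; try apply Rabs_pos; unfold K; pose proof (Rabs_pos a); lra. }
  assert (Rabs a * Rabs (g x - b) <= K * e').
  { apply Rmult_le_compat; try apply Rabs_pos; unfold K; pose proof (Rabs_pos b); lra. }
  assert (e' * K <= e / 4).
  { apply Rle_trans with (e / (4 * K) * K); [apply Rmult_le_compat_r; lra|right; field; lra]. }
  lra.
Qed.

Lemma tends_to_abs_gt f l c :
  tends_to Fi f l -> c < Rabs l -> Fi (fun x => c < Rabs (f x)).
Proof.
  intros H Hc. eapply filter_imp; [|exact (H (Rabs l - c) ltac:(lra))].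
  intros x E. pose proof (Rabs_sub_triang l (f x) 0).
  rewrite !Rminus_0_r, (Rabs_minus_sym l) in H0. lra.
Qed.

Lemma tends_to_inv f a :
  tends_to Fi f a -> a <> 0 -> tends_to Fi (fun x => / f x) (/ a).
Proof.
  intros H Ha e He. assert (Hap : Rabs a > 0) by now apply Rabs_pos_lt.
  set (e' := e * (Rabs a * Rabs a) / 2).
  assert (He' : e' > 0) by (unfold e'; apply Rdiv_lt_0_compat; [apply Rmult_lt_0_compat|]; nra).
  eapply filter_imp;
    [|apply filter_and; [exact (tends_to_abs_gt f a (Rabs a / 2) H ltac:(lra))|exact (H e' He')]].
  intros x [E1 E2]. assert (Hfx : f x <> 0) by (intro Z; rewrite Z, Rabs_R0 in E1; lra).
  replace (/ f x - / a) with (- (f x - a) / (f x * a)) by (field; auto).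
  unfold Rdiv. rewrite Rabs_mult, Rabs_Ropp, Rabs_inv, Rabs_mult.
  apply Rmult_lt_reg_r with (Rabs (f x) * Rabs a); [apply Rmult_lt_0_compat; lra|].
  rewrite Rmult_assoc, Rinv_l by (apply Rgt_not_eq, Rmult_lt_0_compat; lra).
  apply Rlt_le_trans with e'; [lra|]. unfold e'.
  apply Rle_trans with (e * (Rabs a / 2 * Rabs a)); [right; field|].
  apply Rmult_le_compat_l; [lra|apply Rmult_le_compat_r; lra].
Qed.

Lemma tends_to_div f g a b : tends_to Fi f a -> tends_to Fi g b -> b <> 0 ->
  tends_to Fi (fun x => f x / g x) (a / b).
Proof. intros Hf Hg Hb. apply tends_to_mult; [exact Hf|now apply tends_to_inv]. Qed.

Lemma tends_to_lt f a c : tends_to Fi f a -> a < c -> Fi (fun x => f x < c).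
Proof.
  intros H Hc. eapply filter_imp; [|exact (H (c - a) ltac:(lra))].
  intros x E. apply Rabs_def2 in E. lra.
Qed.

Lemma tends_to_gt f a c : tends_to Fi f a -> c < a -> Fi (fun x => c < f x).
Proof.
  intros H Hc. eapply filter_imp; [|exact (H (a - c) ltac:(lra))].
  intros x E. apply Rabs_def2 in E. lra.
Qed.

Lemma filter_forall_lt_nat (P : nat -> T -> Prop) n :
  (forall j, (j < n)%nat -> Fi (P j)) -> Fi (fun x => forall j, (j < n)%nat -> P j x).
Proof.
  induction n as [|n IH]; intros H.
  - apply filter_forall. intros x j Hj. lia.
  - eapply filter_imp; [|apply filter_and; [exact (IH (fun j Hj => H j ltac:(lia)))|exact (H n ltac:(lia))]].
    intros x [H1 H2] j Hj. destruct (Nat.eq_dec j n) as [->|]; [exact H2|apply H1; lia].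
Qed.

End TendsTo.

Lemma tends_to_locally_eps f l : tends_to (locally 0) f l ->
  forall e, e > 0 -> exists d, d > 0 /\ forall t, Rabs t < d -> Rabs (f t - l) < e.
Proof.
  intros H e He. destruct (H e He) as [[d Hd] K]. exists d. split; [exact Hd|].
  intros t Ht. apply K. apply ball_R. now rewrite Rminus_0_r.
Qed.

Lemma tends_to_locally_id : tends_to (locally 0) (fun t => t) 0.
Proof. intros e He. exists (mkposreal e He). intros y Hy. exact Hy. Qed.

Definition locally00 : (R * R -> Prop) -> Prop := filter_prod (locally 0) (locally 0).

#[local] Instance locally00_filter : Filter locally00.
Proof. apply filter_prod_filter; apply locally_filter. Qed.

Lemma locally00_eps P : locally00 P ->
  exists d, d > 0 /\ forall t y, Rabs t < d -> Rabs y < d -> P (t, y).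
Proof.
  intros [Q1 Q2 [[d1 Hd1] K1] [[d2 Hd2] K2] K].
  exists (Rmin d1 d2). split; [now apply Rmin_pos|].
  intros t y Ht Hy. apply K.
  - apply K1. apply ball_R. rewrite Rminus_0_r. pose proof (Rmin_l d1 d2). simpl in *. lra.
  - apply K2. apply ball_R. rewrite Rminus_0_r. pose proof (Rmin_r d1 d2). simpl in *. lra.
Qed.

Lemma tends_to_fst : tends_to locally00 fst 0.
Proof.
  intros e He. exists (fun t => Rabs (t - 0) < e) (fun _ => True).
  - exists (mkposreal e He). intros y Hy. exact Hy.
  - apply filter_true.
  - intros x y Hx _. exact Hx.
Qed.

Lemma tends_to_snd : tends_to locally00 snd 0.
Proof.
  intros e He. exists (fun _ => True) (fun t => Rabs (t - 0) < e).
  - apply filter_true.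
  - exists (mkposreal e He). intros y Hy. exact Hy.
  - intros x y _ Hy. exact Hy.
Qed.

Lemma sumR_sum_n g n : sumR (S n) g = sum_n g n.
Proof.
  induction n as [|n IH]; [simpl; rewrite sum_O; ring|].
  change (sumR (S (S n)) g) with (sumR (S n) g + g (S n)). now rewrite IH, sum_Sn.
Qed.

Lemma sumR_tail_geom (g : nat -> R) A q N : 0 <= q < 1 -> 0 <= A ->
  (forall i, (N <= i)%nat -> Rabs (g i) <= A * q ^ (i - N)) ->
  forall k, (N <= k)%nat -> Rabs (sumR k g - sumR N g) <= A / (1 - q).
Proof.
  intros Hq HA Hg.
  assert (H : forall k, (N <= k)%nat ->
            Rabs (sumR k g - sumR N g) <= A * (1 - q ^ (k - N)) / (1 - q)).
  { induction k as [|k IH]; intros Hk.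
    - replace N with 0%nat by lia. simpl. rewrite Rminus_eq_0, Rabs_R0. right; field; lra.
    - destruct (Nat.eq_dec N (S k)) as [<-|NE].
      { rewrite Rminus_eq_0, Rabs_R0, Nat.sub_diag. simpl. right; field; lra. }
      simpl sumR. replace (sumR k g + g k - sumR N g) with ((sumR k g - sumR N g) + g k) by ring.
      eapply Rle_trans; [apply Rabs_triang|].
      eapply Rle_trans; [apply Rplus_le_compat; [exact (IH ltac:(lia))|apply Hg; lia]|].
      replace (S k - N)%nat with (S (k - N)) by lia. right. simpl. field. lra. }
  intros k Hk. eapply Rle_trans; [now apply H|].
  apply Rmult_le_compat_r; [apply Rlt_le, Rinv_0_lt_compat; lra|].
  pose proof (pow_le q (k - N) ltac:(lra)). nra.
Qed.

Lemma is_lim_seq_dist_le (s : nat -> R) (l : R) N B : is_lim_seq s l ->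
  (forall k, (N <= k)%nat -> Rabs (s k - s N) <= B) -> Rabs (l - s N) <= B.
Proof.
  intros Hl Hb.
  refine (is_lim_seq_le_loc (fun k => Rabs (s k - s N)) (fun _ => B)
            (Rabs (l - s N)) B _ _ _).
  - exists N. exact Hb.
  - apply (is_lim_seq_abs _ (l - s N)). apply is_lim_seq_minus'; [exact Hl|apply is_lim_seq_const].
  - apply is_lim_seq_const.
Qed.

Lemma pow_large lam B : lam > 1 -> exists N, forall n, (N <= n)%nat -> B < lam ^ n.
Proof.
  intros Hl. destruct (Pow_x_infinity lam ltac:(rewrite Rabs_right; lra) (B + 1)) as [N HN].
  exists N. intros n Hn. specialize (HN n Hn).
  rewrite Rabs_right in HN by (apply Rle_ge, pow_le; lra). lra.
Qed.

Lemma exists_least_nat (Q : nat -> Prop) :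
  (exists n, Q n) -> exists n, Q n /\ forall m, (m < n)%nat -> ~ Q m.
Proof.
  intros [n Hn]. revert Hn. induction n as [n IH] using (well_founded_induction Wf_nat.lt_wf).
  intros Hn. destruct (classic (exists m, (m < n)%nat /\ Q m)) as [[m [Hm Qm]]|Hno].
  - exact (IH m Hm Qm).
  - exists n. split; [exact Hn|]. intros m Hm Qm. apply Hno. eauto.
Qed.

Lemma seq_to_0_of_small_witnesses (P : R -> Prop) :
  (forall eps, eps > 0 -> exists t, 0 < t < eps /\ P t) ->
  exists tn : nat -> R, is_lim_seq tn 0 /\ forall n, P (tn n).
Proof.
  intros H.
  assert (Hn : forall n, exists t, 0 < t < / INR (S n) /\ P t).
  { intros n. apply H, Rinv_0_lt_compat, lt_0_INR. lia. }
  destruct (choice _ Hn) as [tn Htn].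
  exists tn. split; [|intros n; apply Htn].
  apply (is_lim_seq_le_le (fun _ => 0) _ (fun n => / INR (S n))).
  - intros n. destruct (Htn n). lra.
  - apply is_lim_seq_const.
  - apply (is_lim_seq_incr_1 (fun n => / INR n)).
    apply (is_lim_seq_inv _ p_infty); [apply is_lim_seq_INR|discriminate].
Qed.

Lemma U1_Dm f : U1 f -> forall x, -1 <= x <= 0 -> is_hderiv f (-1) 0 x (Dm f x).
Proof. intros [[_ [H _]] _] x Hx. apply hD_spec. apply (H x Hx). Qed.

Lemma U1_Dp f : U1 f -> forall x, 0 <= x <= 1 -> is_hderiv f 0 1 x (Dp f x).
Proof. intros [[_ [_ [H _]]] _] x Hx. apply hD_spec. apply (H x Hx). Qed.

Lemma U1_maps_I f : U1 f -> forall y, -1 <= y <= 1 -> -1 <= f y <= 1.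
Proof.
  intros HU y Hy. pose proof HU as [_ [Hm1 [H1 [[l1 [Hl1 K1]] [[l2 [Hl2 K2]] H0]]]]].
  destruct (Rle_dec y 0).
  - assert (A := incr_ge_of_hderiv_ge f (Dm f) (-1) 0 l1 ltac:(lra) (U1_Dm f HU)
                   ltac:(intros x Hx; specialize (K1 x Hx); lra)).
    pose proof (A (-1) y ltac:(lra) ltac:(lra) ltac:(lra)).
    pose proof (A y 0 ltac:(lra) ltac:(lra) ltac:(lra)). split; nra.
  - assert (A := incr_le_of_hderiv_le f (Dp f) 0 1 l2 ltac:(lra) (U1_Dp f HU)
                   ltac:(intros x Hx; specialize (K2 x Hx); lra)).
    pose proof (A y 1 ltac:(lra) ltac:(lra) ltac:(lra)).
    pose proof (A 0 y ltac:(lra) ltac:(lra) ltac:(lra)). split; nra.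
Qed.

Lemma iter_in_I f n y : U1 f -> -1 <= y <= 1 -> -1 <= Nat.iter n f y <= 1.
Proof. intros H Hy. induction n; simpl; [exact Hy|now apply U1_maps_I]. Qed.

Lemma Df_abs_gt1 f z : U1 f -> -1 <= z <= 1 -> 1 < Rabs (Df f z).
Proof.
  intros [_ [_ [_ [[l1 [Hl1 K1]] [[l2 [Hl2 K2]] _]]]]] Hz. unfold Df.
  destruct (Rle_dec z 0).
  - specialize (K1 z ltac:(lra)). rewrite Rabs_right; lra.
  - specialize (K2 z ltac:(lra)). rewrite Rabs_left; lra.
Qed.

Lemma Df_neq0 f z : U1 f -> -1 <= z <= 1 -> Df f z <> 0.
Proof. intros H Hz E. pose proof (Df_abs_gt1 f z H Hz). rewrite E, Rabs_R0 in H0. lra. Qed.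

Lemma Dfn_neq0 f n y : U1 f -> -1 <= y <= 1 -> Dfn f n y <> 0.
Proof.
  intros H Hy. induction n as [|n IH]; simpl; [lra|].
  apply Rmult_integral_contrapositive_currified; [exact IH|].
  now apply Df_neq0, iter_in_I.
Qed.

Lemma Dfn_abs_ge_pow f y lam n : 0 <= lam ->
  (forall k, lam <= Rabs (Df f (Nat.iter k f y))) -> lam ^ n <= Rabs (Dfn f n y).
Proof.
  intros Hl H. induction n as [|n IH]; simpl; [rewrite Rabs_R1; lra|].
  rewrite Rabs_mult, Rmult_comm. apply Rmult_le_compat; auto. now apply pow_le.
Qed.

Lemma Dfn_add f a n w : Dfn f (a + n) w = Dfn f a w * Dfn f n (Nat.iter a f w).
Proof.
  induction n as [|n IH]; [rewrite Nat.add_0_r; simpl; ring|].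
  rewrite Nat.add_succ_r. simpl. rewrite IH, <- Nat.iter_add.
  replace (n + a)%nat with (a + n)%nat by lia. ring.
Qed.

Definition Jblock (f v : R -> R) (n : nat) (y : R) : R :=
  sumR n (fun i => v (Nat.iter i f y) / Dfn f i (f y)).

Lemma sumR_Jterm_split f v a n : Dfn f a (f 0) <> 0 ->
  (forall i, (i < n)%nat -> Dfn f i (f (Nat.iter a f 0)) <> 0) ->
  sumR (a + n) (Jterm f v) = sumR a (Jterm f v) + Jblock f v n (Nat.iter a f 0) / Dfn f a (f 0).
Proof.
  intros Ha Hi. induction n as [|n IH].
  - rewrite Nat.add_0_r. unfold Jblock. simpl. field. exact Ha.
  - rewrite Nat.add_succ_r. simpl sumR. rewrite IH by (intros; apply Hi; lia).
    unfold Jblock. simpl sumR. unfold Jterm.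
    rewrite Dfn_add, Nat.iter_swap, Nat.add_comm, Nat.iter_add.
    assert (Dfn f n (f (Nat.iter a f 0)) <> 0) by (apply Hi; lia).
    field. split; assumption.
Qed.

Lemma prime_period_unique f p q : prime_period f p -> prime_period f q -> p = q.
Proof.
  intros [Hp1 [Hp2 Hp3]] [Hq1 [Hq2 Hq3]].
  destruct (Nat.lt_trichotomy p q) as [H|[H|H]]; [|exact H|].
  - exfalso. now apply (Hq3 p).
  - exfalso. now apply (Hp3 q).
Qed.

Lemma iter_mul_period f p m : Nat.iter p f 0 = 0 -> Nat.iter (m * p) f 0 = 0.
Proof.
  intros H. induction m as [|m IH]; [reflexivity|].
  replace (S m * p)%nat with (p + m * p)%nat by lia. now rewrite Nat.iter_add, IH.
Qed.

Lemma J_periodic f v p : prime_period f p -> J f v = sumR p (Jterm f v).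
Proof.
  intros Hp. unfold J. destruct (excluded_middle_informative (periodic f)) as [_|Hn].
  - f_equal. apply (prime_period_unique f); [|exact Hp].
    apply (epsilon_spec (inhabits 0%nat) (prime_period f)). eauto.
  - exfalso. apply Hn. exists p. split; apply Hp.
Qed.

Lemma J_not_periodic f v : ~ periodic f -> J f v = Series (Jterm f v).
Proof.
  intros Hn. unfold J. now destruct (excluded_middle_informative (periodic f)).
Qed.

Lemma no_return_inside_block f q p r :
  (forall j, (1 <= j < p)%nat -> Nat.iter j f (Nat.iter q f 0) <> 0) ->
  Nat.iter r f 0 = 0 -> (q < r)%nat -> (q + p <= r)%nat.
Proof.
  intros Hno Hr Hqr. apply Nat.nlt_ge. intros H. apply (Hno (r - q)%nat); [lia|].
  rewrite <- Nat.iter_add. now replace (r - q + q)%nat with r by lia.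
Qed.

Lemma Dfn_block f q p : (1 <= p)%nat ->
  Dfn f (q + p) (f 0)
  = Dfn f q (f 0) * (Dfn f (p - 1) (f (Nat.iter q f 0)) * Df f (Nat.iter (q + p) f 0)).
Proof.
  intros Hp. rewrite Dfn_add, Nat.iter_swap. f_equal.
  replace p with (S (p - 1)) at 1 by lia. cbn [Dfn]. f_equal. f_equal.
  rewrite <- Nat.iter_succ_r, Nat.add_comm, Nat.iter_add. f_equal. lia.
Qed.

Section Shadowing.
(* [y i] is the orbit of the critical point, [E i = Df^i], [g i] the terms of J;
   blocks of length [p] start at [m * p]; [B m] is the block sum of the [m]-th block. *)
Variables (y E g B : nat -> R) (p r : nat) (dl ka eta Jv : R).
Hypothesis (Hp : (1 <= p)%nat) (Hr : (1 <= r)%nat) (Hy0 : y 0%nat = 0) (HE0 : E 0%nat = 1)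
  (Hdl : dl > 0) (Hka : ka > 2) (Heta : 0 <= eta) (HEnz : forall i, E i <> 0).
Hypothesis Hblock : forall m, Rabs (y (m * p)%nat) < dl -> (m * p < r)%nat ->
  ((m + 1) * p <= r)%nat /\
  sumR ((m + 1) * p) g - sumR (m * p) g = B m / E (m * p)%nat /\
  Rabs (B m - Jv) <= eta /\
  (Rabs (y ((m + 1) * p)%nat) < dl -> Rabs (E ((m + 1) * p)%nat) >= ka * Rabs (E (m * p)%nat)) /\
  Rabs (E ((m + 1) * p)%nat) >= Rabs (E (m * p)%nat).

Let shadowing m := Rabs (y (m * p)%nat) < dl /\ (m * p < r)%nat.

Lemma shadowing_blocks k : (forall m, (m <= k)%nat -> shadowing m) ->
  ((k + 1) * p <= r)%nat /\ Rabs (E (k * p)%nat) >= ka ^ k /\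
  Rabs (E ((k + 1) * p)%nat) >= ka ^ k /\
  Rabs (sumR ((k + 1) * p) g - B 0%nat) <= (Rabs Jv + eta) * (1 - (/ ka) ^ k) / (ka - 1).
Proof.
  induction k as [|k IH]; intros Hs.
  - destruct (Hs 0%nat (le_n _)) as [G1 G2].
    destruct (Hblock 0%nat G1 G2) as [B1 [B2 [_ [_ B5]]]].
    simpl in *. rewrite HE0, Rabs_R1 in *. split; [exact B1|]. split; [lra|]. split; [lra|].
    replace (sumR (p + 0) g) with (sumR (p + 0) g - 0) by ring.
    rewrite B2, Rdiv_1_r, Rminus_eq_0, Rabs_R0. right; field; lra.
  - destruct IH as [I1 [I2 [I3 I4]]]; [intros m Hm; apply Hs; lia|].
    destruct (Hs k ltac:(lia)) as [G1 G2].
    destruct (Hblock k G1 G2) as [_ [_ [_ [B4 _]]]].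
    destruct (Hs (S k) (le_n _)) as [G1' G2'].
    destruct (Hblock (S k) G1' G2') as [C1 [C2 [C3 [_ C5]]]].
    replace (S k * p)%nat with ((k + 1) * p)%nat in * by lia.
    assert (HEk : Rabs (E ((k + 1) * p)%nat) >= ka ^ S k) by (specialize (B4 G1'); simpl; nra).
    split; [exact C1|]. split; [exact HEk|]. split; [lra|].
    replace (sumR ((S k + 1) * p) g - B 0%nat) with
      ((sumR ((k + 1) * p) g - B 0%nat) + (sumR ((S k + 1) * p) g - sumR ((k + 1) * p) g))
      by ring.
    rewrite C2. eapply Rle_trans; [apply Rabs_triang|].
    assert (Hkp : ka ^ S k > 0) by (apply pow_lt; lra).
    assert (HB : Rabs (B (S k)) <= Rabs Jv + eta).
    { pose proof (Rabs_sub_triang (B (S k)) Jv 0). rewrite !Rminus_0_r in H. lra. }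
    assert (Rabs (B (S k) / E ((k + 1) * p)%nat) <= (Rabs Jv + eta) * (/ ka) ^ S k).
    { unfold Rdiv. rewrite Rabs_mult, Rabs_inv, pow_inv.
      apply Rmult_le_compat; [apply Rabs_pos| |exact HB|].
      - apply Rlt_le, Rinv_0_lt_compat, Rabs_pos_lt, HEnz.
      - apply Rinv_le_contravar; lra. }
    assert ((Rabs Jv + eta) * (1 - (/ ka) ^ k) / (ka - 1) + (Rabs Jv + eta) * (/ ka) ^ S k
            = (Rabs Jv + eta) * (1 - (/ ka) ^ S k) / (ka - 1)).
    { simpl. field. lra. }
    lra.
Qed.

Lemma shadowing_sum_neq0 (M0 : nat) (W : R) : 0 <= W ->
  (forall N, (N <= r)%nat -> Rabs (sumR r g - sumR N g) <= W / Rabs (E N)) ->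
  (forall m, (m <= M0)%nat -> Rabs (y (m * p)%nat) < dl) ->
  (Rabs Jv - eta) - (Rabs Jv + eta) / (ka - 1) - W / ka ^ M0 > 0 ->
  sumR r g <> 0.
Proof.
  intros HW Htail HM0 Hnum.
  (* [M] is the first block at which the perturbed orbit leaves the [dl]-neighbourhood *)
  destruct (exists_least_nat (fun m => ~ shadowing m)) as [M [HM HMl]].
  { exists r. intros [_ H]. nia. }
  assert (HM1 : (1 <= M)%nat).
  { destruct M; [|lia]. exfalso. apply HM. unfold shadowing. simpl.
    rewrite Hy0, Rabs_R0. split; [lra|lia]. }
  destruct (shadowing_blocks (M - 1)) as [I1 [_ [I3 I4]]].
  { intros m Hm. apply NNPP. apply HMl. lia. }
  replace (M - 1 + 1)%nat with M in I1, I3, I4 by lia.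
  assert (HB0 : Rabs (B 0%nat) >= Rabs Jv - eta).
  { destruct (Hblock 0%nat) as [_ [_ [B3 _]]].
    - simpl. rewrite Hy0, Rabs_R0. exact Hdl.
    - simpl. lia.
    - pose proof (Rabs_sub_triang Jv (B 0%nat) 0). rewrite !Rminus_0_r, Rabs_minus_sym in H.
      lra. }
  assert (Hgeo : (Rabs Jv + eta) * (1 - (/ ka) ^ (M - 1)) / (ka - 1)
                 <= (Rabs Jv + eta) / (ka - 1)).
  { pose proof (pow_le (/ ka) (M - 1) ltac:(apply Rlt_le, Rinv_0_lt_compat; lra)).
    unfold Rdiv. apply Rmult_le_compat_r; [apply Rlt_le, Rinv_0_lt_compat; lra|].
    pose proof (Rabs_pos Jv). nra. }
  assert (HT : Rabs (sumR r g - sumR (M * p) g) <= W / ka ^ M0).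
  { destruct (Nat.eq_dec (M * p) r) as [<-|NE].
    { rewrite Rminus_eq_0, Rabs_R0. apply Rdiv_le_0_compat; [exact HW|apply pow_lt; lra]. }
    assert (HMM : (M0 < M)%nat).
    { apply Nat.nle_gt. intros HMM. apply HM. split; [apply HM0; lia|lia]. }
    eapply Rle_trans; [apply Htail; lia|].
    unfold Rdiv. apply Rmult_le_compat_l; [exact HW|].
    apply Rinv_le_contravar; [apply pow_lt; lra|].
    apply Rge_le. eapply Rge_trans; [exact I3|]. apply Rle_ge, Rle_pow; [lra|lia]. }
  intro Z.
  pose proof (Rabs_sub_triang (B 0%nat) (sumR (M * p) g) 0).
  pose proof (Rabs_sub_triang (sumR (M * p) g) (sumR r g) 0).
  rewrite !Rminus_0_r, (Rabs_minus_sym (B 0%nat)) in H.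
  rewrite !Rminus_0_r, (Rabs_minus_sym (sumR (M * p) g)) in H0.
  assert (Rabs (sumR r g) = 0) by (rewrite Z; apply Rabs_R0). lra.
Qed.

End Shadowing.

Lemma hD_diff_quotient f1 f0 g a b x l1 l0 l2 h : a < b -> a <= x <= b -> h <> 0 ->
  is_hderiv f1 a b x l1 -> is_hderiv f0 a b x l0 -> is_hderiv g a b x l2 ->
  hD (fun y => (f1 y - f0 y) / h - g y) a b x = (l1 - l0) / h - l2.
Proof.
  intros Hab Hx Hh H1 H0 H2. apply hD_eq; [exact Hab|exact Hx|].
  pose proof (is_hderiv_lin _ g a b x _ l2 1 (-1)
                (is_hderiv_lin f1 f0 a b x l1 l0 (/ h) (- / h) H1 H0) H2) as K.
  replace ((l1 - l0) / h - l2) with (1 * (/ h * l1 + - / h * l0) + -1 * l2) by (field; auto).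
  replace (fun y => (f1 y - f0 y) / h - g y)
    with (fun y => 1 * (/ h * f1 y + - / h * f0 y) + -1 * g y); [exact K|].
  apply functional_extensionality. intros y. field. exact Hh.
Qed.

Lemma abs_diff_le_of_quotient A B C h V : h <> 0 ->
  Rabs ((A - B) / h - C) <= 1 -> Rabs C <= V -> Rabs (A - B) <= Rabs h * (V + 1).
Proof.
  intros Hh H HC.
  replace (A - B) with (((A - B) / h - C + C) * h) by (field; auto).
  rewrite Rabs_mult, Rmult_comm. apply Rmult_le_compat_l; [apply Rabs_pos|].
  eapply Rle_trans; [apply Rabs_triang|lra].
Qed.

Lemma tends_to_uniform_comp {T} {Fi : (T -> Prop) -> Prop} {FF : Filter Fi}
  (H : T -> R -> R) (h0 : R -> R) a b (yy : T -> R) y0 :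
  (forall e, e > 0 -> Fi (fun x => forall y, a <= y <= b -> Rabs (H x y - h0 y) <= e)) ->
  cont_on h0 a b -> tends_to Fi yy y0 -> Fi (fun x => a <= yy x <= b) -> a <= y0 <= b ->
  tends_to Fi (fun x => H x (yy x)) (h0 y0).
Proof.
  intros Hu Hc Hy HI Hy0 e He.
  destruct (cont_on_eps h0 a b y0 Hc Hy0 (e / 2) ltac:(lra)) as [d [Hd K]].
  eapply filter_imp;
    [|apply filter_and; [exact (Hu (e / 2) ltac:(lra))|apply filter_and; [exact HI|exact (Hy d Hd)]]].
  intros x [E1 [E2 E3]]. specialize (E1 (yy x) E2). specialize (K (yy x) E2 E3).
  pose proof (Rabs_sub_triang (H x (yy x)) (h0 (yy x)) (h0 y0)). lra.
Qed.

Lemma derivable_pt_lim_lipschitz phi t0 phi' : derivable_pt_lim phi t0 phi' ->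
  exists d, d > 0 /\ forall h, Rabs h < d ->
    Rabs (phi (t0 + h) - phi t0) <= (Rabs phi' + 1) * Rabs h.
Proof.
  intros H. destruct (H 1 ltac:(lra)) as [[d Hd] K]. exists d. split; [exact Hd|].
  intros h Hh. destruct (Req_dec h 0) as [->|Hh0].
  { rewrite Rplus_0_r, Rminus_eq_0, Rabs_R0. lra. }
  specialize (K h Hh0 Hh).
  replace (phi (t0 + h) - phi t0) with ((phi (t0 + h) - phi t0) / h * h) by (field; exact Hh0).
  rewrite Rabs_mult. apply Rmult_le_compat_r; [apply Rabs_pos|].
  pose proof (Rabs_sub_triang ((phi (t0 + h) - phi t0) / h) phi' 0). rewrite !Rminus_0_r in H0.
  lra.
Qed.

Lemma derivable_pt_lim_comp_hderiv f phi a b t0 l phi' :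
  is_hderiv f a b (phi t0) l -> derivable_pt_lim phi t0 phi' ->
  (exists d, d > 0 /\ forall h, Rabs h < d -> a <= phi (t0 + h) <= b) ->
  derivable_pt_lim (fun t => f (phi t)) t0 (l * phi').
Proof.
  intros Hf Hphi [d0 [Hd0 Hab]] eps Heps.
  set (K := Rabs phi' + 1). set (L := Rabs l + 1).
  assert (HK : K > 0) by (pose proof (Rabs_pos phi'); unfold K; lra).
  assert (HL : L > 0) by (pose proof (Rabs_pos l); unfold L; lra).
  destruct (derivable_pt_lim_lipschitz phi t0 phi' Hphi) as [d1 [Hd1 K1]].
  destruct (Hphi (eps / (4 * L)) ltac:(apply Rdiv_lt_0_compat; lra)) as [[d2 Hd2] K2].
  destruct (is_hderiv_little_o _ _ _ _ _ Hf (eps / (4 * K)) ltac:(apply Rdiv_lt_0_compat; lra))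
    as [dq [Hdq Kq]].
  set (r := Rmin (Rmin d0 d1) (Rmin d2 (dq / K))).
  assert (Hr : 0 < r) by (repeat apply Rmin_pos; try apply Rdiv_lt_0_compat; lra).
  exists (mkposreal r Hr). intros h Hh Hhr. simpl in Hhr, K2.
  assert (Hhr' : Rabs h < d0 /\ Rabs h < d1 /\ Rabs h < d2 /\ K * Rabs h < dq).
  { pose proof (Rmin_l (Rmin d0 d1) (Rmin d2 (dq / K))).
    pose proof (Rmin_r (Rmin d0 d1) (Rmin d2 (dq / K))).
    pose proof (Rmin_l d0 d1). pose proof (Rmin_r d0 d1).
    pose proof (Rmin_l d2 (dq / K)). pose proof (Rmin_r d2 (dq / K)).
    repeat split; unfold r in *; try lra.
    apply (Rmult_lt_reg_r (/ K)); [now apply Rinv_0_lt_compat|].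
    replace (K * Rabs h * / K) with (Rabs h) by (field; lra). unfold Rdiv in *. lra. }
  destruct Hhr' as [H0 [H1 [H2 H3]]].
  specialize (K1 h H1). fold K in K1. specialize (K2 h Hh H2).
  assert (Herr := Kq (phi (t0 + h)) (Hab h H0) ltac:(lra)).
  assert (Hhp : Rabs h > 0) by now apply Rabs_pos_lt.
  (* first-order expansion of [f] at [phi t0] plus the difference quotient of [phi] *)
  replace ((f (phi (t0 + h)) - f (phi t0)) / h - l * phi')
    with (l * ((phi (t0 + h) - phi t0) / h - phi')
          + (f (phi (t0 + h)) - f (phi t0) - l * (phi (t0 + h) - phi t0)) / h)
    by (field; exact Hh).
  eapply Rle_lt_trans; [apply Rabs_triang|].
  unfold Rdiv at 2. rewrite !Rabs_mult, Rabs_inv.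
  assert (Rabs l * Rabs ((phi (t0 + h) - phi t0) / h - phi') <= eps / 4).
  { apply Rle_trans with (L * (eps / (4 * L))); [|right; field; lra].
    apply Rmult_le_compat; try apply Rabs_pos; [unfold L; lra|lra]. }
  assert (Rabs (f (phi (t0 + h)) - f (phi t0) - l * (phi (t0 + h) - phi t0)) * / Rabs h
          <= eps / 4).
  { apply (Rmult_le_reg_r (Rabs h)); [exact Hhp|].
    rewrite Rmult_assoc, Rinv_l, Rmult_1_r by lra.
    apply Rle_trans with (eps / (4 * K) * (K * Rabs h)); [|right; field; lra].
    eapply Rle_trans; [exact Herr|].
    apply Rmult_le_compat_l; [apply Rlt_le, Rdiv_lt_0_compat; lra|exact K1]. }
  lra.
Qed.

Lemma lap_hderiv f y0 : U1 f -> -1 <= y0 <= 1 -> y0 <> 0 ->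
  exists a b, a < b /\ is_hderiv f a b y0 (Df f y0) /\
    forall y, -1 <= y <= 1 -> Rabs (y - y0) < Rabs y0 -> a <= y <= b.
Proof.
  intros HU Hy Hn. unfold Df. destruct (Rle_dec y0 0).
  - exists (-1), 0. split; [lra|]. split; [apply U1_Dm; auto; lra|].
    intros y Hy' Hd. rewrite (Rabs_left y0) in Hd by lra. apply Rabs_def2 in Hd. lra.
  - exists 0, 1. split; [lra|]. split; [apply U1_Dp; auto; lra|].
    intros y Hy' Hd. rewrite (Rabs_right y0) in Hd by lra. apply Rabs_def2 in Hd. lra.
Qed.

Lemma continuity_pt_eps f x : continuity_pt f x ->
  forall e, e > 0 -> exists d, d > 0 /\ forall h, Rabs h < d -> Rabs (f (x + h) - f x) < e.
Proof.
  intros C e He. destruct (C e He) as [d [Hd K]]. exists d. split; [exact Hd|].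
  intros h Hh. destruct (Req_dec h 0) as [->|Hh0].
  - rewrite Rplus_0_r, Rminus_eq_0, Rabs_R0. exact He.
  - apply (K (x + h)). split; [split; [exact I|lra]|]. simpl. unfold R_dist.
    now replace (x + h - x) with h by ring.
Qed.

Lemma product_lower_approx Lam mu c : 0 < Lam -> 0 < mu -> 0 < c < Lam * mu ->
  exists Lam' mu', 0 < Lam' < Lam /\ 0 < mu' < mu /\ c <= Lam' * mu'.
Proof.
  intros HL Hm Hc.
  set (rho := c / (Lam * mu)).
  assert (Hrho : 0 < rho < 1).
  { unfold rho. split; [apply Rdiv_lt_0_compat; nra|].
    apply (Rmult_lt_reg_r (Lam * mu)); [nra|]. field_simplify; nra. }
  set (th := (1 + rho) / 2).
  exists (Lam * th), (mu * th). unfold th. split; [split; nra|]. split; [split; nra|].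
  replace c with (Lam * mu * rho) by (unfold rho; field; nra).
  assert (0 <= Lam * mu * ((1 - rho) * (1 - rho))) by (apply Rmult_le_pos; nra). nra.
Qed.

Lemma shadowing_constants Jv Lam mu : Jv <> 0 -> 0 <= Lam -> 0 <= mu -> Lam * mu > 2 ->
  exists ka Lam' mu' eta, 2 < ka /\ 0 < Lam' < Lam /\ 0 < mu' < mu /\ ka <= Lam' * mu' /\
    0 < eta /\ forall w, w <= eta -> (Rabs Jv - eta) - (Rabs Jv + eta) / (ka - 1) - w > 0.
Proof.
  intros HJ HLam Hmu Hgood.
  set (ka := (2 + Lam * mu) / 2).
  destruct (product_lower_approx Lam mu ka ltac:(nra) ltac:(nra) ltac:(unfold ka; lra))
    as [Lam' [mu' [HL' [Hm' Hka]]]].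
  set (c := / (ka - 1)).
  assert (Hc : 0 < c < 1).
  { unfold c. split; [apply Rinv_0_lt_compat; unfold ka; lra|].
    rewrite <- Rinv_1. apply Rinv_lt_contravar; unfold ka; lra. }
  assert (HJp : Rabs Jv > 0) by now apply Rabs_pos_lt.
  exists ka, Lam', mu', (Rabs Jv * (1 - c) / 4).
  split; [unfold ka; lra|]. split; [exact HL'|]. split; [exact Hm'|]. split; [exact Hka|].
  split; [apply Rdiv_lt_0_compat; [apply Rmult_lt_0_compat|]; lra|].
  intros w Hw.
  replace ((Rabs Jv - Rabs Jv * (1 - c) / 4) - (Rabs Jv + Rabs Jv * (1 - c) / 4) / (ka - 1))
    with (Rabs Jv * (1 - c) - Rabs Jv * (1 - c) / 4 * (1 + c)) by (unfold c; field; unfold ka; lra).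
  assert (HX : 0 < Rabs Jv * (1 - c)) by (apply Rmult_lt_0_compat; lra).
  assert (0 < Rabs Jv * (1 - c) * (1 - c)) by (apply Rmult_lt_0_compat; lra).
  nra.
Qed.

Section Family.
Variables (F G : R -> R -> R) (delta : R).
Hypothesis HF : C1_family F G delta.

Lemma delta_pos : 0 < delta.
Proof. apply HF. Qed.

Lemma F_U1 t : Rabs t < delta -> U1 (F t).
Proof. apply HF. Qed.

Lemma G_B1 t : Rabs t < delta -> Defs.B1 (G t).
Proof. apply HF. Qed.

Lemma abs0_lt_delta : Rabs 0 < delta.
Proof. rewrite Rabs_R0. exact delta_pos. Qed.

Lemma F_diff_quotient_close t0 : Rabs t0 < delta -> forall e, e > 0 -> exists eta, eta > 0 /\
  forall h, h <> 0 -> Rabs h < eta -> Rabs (t0 + h) < delta ->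
   (forall y, -1 <= y <= 1 -> Rabs ((F (t0 + h) y - F t0 y) / h - G t0 y) <= e) /\
   (forall y, -1 <= y <= 0 ->
      Rabs ((Dm (F (t0 + h)) y - Dm (F t0) y) / h - Dm (G t0) y) <= e) /\
   (forall y, 0 <= y <= 1 ->
      Rabs ((Dp (F (t0 + h)) y - Dp (F t0) y) / h - Dp (G t0) y) <= e).
Proof.
  intros Ht0 e He. destruct HF as [_ [_ [_ [Hq _]]]].
  destruct (Hq t0 Ht0 e He) as [eta [Heta K]]. exists eta. split; [exact Heta|].
  intros h Hh Hh1 Hh2. destruct (K h Hh Hh1 Hh2) as [K1 K2].
  pose proof (F_U1 _ Hh2) as U1h. pose proof (F_U1 _ Ht0) as U10.
  destruct (G_B1 _ Ht0) as [_ [Cm [Cp _]]].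
  split; [|split].
  - intros y Hy. destruct (Rle_dec y 0); [apply (K1 y)|apply (K2 y)]; lra.
  - intros y Hy. destruct (K1 y Hy) as [_ E]. unfold Dm in E.
    rewrite (hD_diff_quotient _ _ _ _ _ _ (Dm (F (t0 + h)) y) (Dm (F t0) y) (Dm (G t0) y)) in E;
      [exact E|lra|exact Hy|exact Hh|now apply U1_Dm|now apply U1_Dm|].
    apply hD_spec, (Cm y Hy).
  - intros y Hy. destruct (K2 y Hy) as [_ E]. unfold Dp in E.
    rewrite (hD_diff_quotient _ _ _ _ _ _ (Dp (F (t0 + h)) y) (Dp (F t0) y) (Dp (G t0) y)) in E;
      [exact E|lra|exact Hy|exact Hh|now apply U1_Dp|now apply U1_Dp|].
    apply hD_spec, (Cp y Hy).
Qed.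

Lemma G_close t0 : Rabs t0 < delta -> forall e, e > 0 -> exists eta, eta > 0 /\
  forall s, Rabs s < delta -> Rabs (s - t0) < eta ->
    forall y, -1 <= y <= 1 -> Rabs (G s y - G t0 y) <= e.
Proof.
  intros Ht0 e He. destruct HF as [_ [_ [_ [_ Hc]]]].
  destruct (Hc t0 Ht0 e He) as [eta [Heta K]]. exists eta. split; [exact Heta|].
  intros s Hs Hst y Hy. destruct (K s Hs Hst) as [K1 K2].
  destruct (Rle_dec y 0); [apply (K1 y)|apply (K2 y)]; lra.
Qed.

Lemma F_lipschitz_at_0 : exists C tau, C > 0 /\ tau > 0 /\ tau <= delta /\
  forall t, Rabs t < tau ->
   (forall y, -1 <= y <= 1 -> Rabs (F t y - F 0 y) <= C * Rabs t) /\
   (forall y, -1 <= y <= 0 -> Rabs (Dm (F t) y - Dm (F 0) y) <= C * Rabs t) /\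
   (forall y, 0 <= y <= 1 -> Rabs (Dp (F t) y - Dp (F 0) y) <= C * Rabs t).
Proof.
  destruct (G_B1 0 abs0_lt_delta) as [C0 [Cm [Cp _]]].
  destruct (cont_on_bounded (G 0) (-1) 1 ltac:(lra) C0) as [V0 HV0].
  destruct (cont_on_bounded (Dm (G 0)) (-1) 0 ltac:(lra) (fun x Hx => proj2 (Cm x Hx)))
    as [Vm HVm].
  destruct (cont_on_bounded (Dp (G 0)) 0 1 ltac:(lra) (fun x Hx => proj2 (Cp x Hx)))
    as [Vp HVp].
  destruct (F_diff_quotient_close 0 abs0_lt_delta 1 ltac:(lra)) as [eta [Heta K]].
  set (V := Rabs V0 + Rabs Vm + Rabs Vp).
  pose proof (Rabs_pos V0). pose proof (Rabs_pos Vm). pose proof (Rabs_pos Vp).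
  pose proof (Rle_abs V0). pose proof (Rle_abs Vm). pose proof (Rle_abs Vp).
  pose proof delta_pos.
  exists (V + 1), (Rmin eta delta). split; [unfold V; lra|]. split; [now apply Rmin_pos|].
  split; [apply Rmin_r|]. intros t Ht.
  pose proof (Rmin_l eta delta). pose proof (Rmin_r eta delta).
  destruct (Req_dec t 0) as [->|Ht0].
  { split; [|split]; intros; rewrite Rminus_eq_0, Rabs_R0; lra. }
  destruct (K t Ht0 ltac:(lra) ltac:(rewrite Rplus_0_l; lra)) as [K1 [K2 K3]].
  rewrite Rplus_0_l in K1, K2, K3.
  rewrite (Rmult_comm (V + 1)).
  split; [|split]; intros y Hy; eapply Rle_trans;
    [apply (abs_diff_le_of_quotient _ _ _ t V Ht0 (K1 y Hy))| |
     apply (abs_diff_le_of_quotient _ _ _ t V Ht0 (K2 y Hy))| |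
     apply (abs_diff_le_of_quotient _ _ _ t V Ht0 (K3 y Hy))| ];
    try lra.
  - specialize (HV0 y Hy). unfold V; lra.
  - specialize (HVm y Hy). unfold V; lra.
  - specialize (HVp y Hy). unfold V; lra.
Qed.

Lemma F_near_F0 e : e > 0 -> exists tau, tau > 0 /\ tau <= delta /\
  forall t, Rabs t < tau ->
   (forall y, -1 <= y <= 1 -> Rabs (F t y - F 0 y) <= e /\ Rabs (G t y - G 0 y) <= e) /\
   (forall y, -1 <= y <= 0 -> Rabs (Dm (F t) y - Dm (F 0) y) <= e) /\
   (forall y, 0 <= y <= 1 -> Rabs (Dp (F t) y - Dp (F 0) y) <= e).
Proof.
  intros He.
  destruct F_lipschitz_at_0 as [C [tau1 [HC [Htau1 [Htd K]]]]].
  destruct (G_close 0 abs0_lt_delta e He) as [eta [Heta KG]].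
  set (tau := Rmin (Rmin tau1 eta) (e / C)).
  assert (Htau : tau > 0) by (repeat apply Rmin_pos; try apply Rdiv_lt_0_compat; lra).
  pose proof (Rmin_l (Rmin tau1 eta) (e / C)). pose proof (Rmin_r (Rmin tau1 eta) (e / C)).
  pose proof (Rmin_l tau1 eta). pose proof (Rmin_r tau1 eta).
  exists tau. split; [exact Htau|]. split; [unfold tau in *; lra|].
  intros t Ht.
  assert (HCt : C * Rabs t <= e).
  { apply Rle_trans with (C * (e / C)); [apply Rmult_le_compat_l; unfold tau in *; lra|].
    right; field; lra. }
  destruct (K t ltac:(unfold tau in *; lra)) as [K1 [K2 K3]].
  split; [|split]; intros y Hy; [split| |].
  - specialize (K1 y Hy). lra.
  - apply KG; [unfold tau in *; lra|rewrite Rminus_0_r; unfold tau in *; lra|exact Hy].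
  - specialize (K2 y Hy). lra.
  - specialize (K3 y Hy). lra.
Qed.

Lemma uniform_expansion : exists lam V tau, lam > 1 /\ V > 0 /\ tau > 0 /\ tau <= delta /\
  forall t, Rabs t < tau -> forall z, -1 <= z <= 1 ->
    lam <= Rabs (Df (F t) z) /\ Rabs (G t z) <= V.
Proof.
  pose proof (F_U1 0 abs0_lt_delta) as [_ [_ [_ [[l1 [Hl1 K1]] [[l2 [Hl2 K2]] _]]]]].
  destruct (cont_on_bounded (G 0) (-1) 1 ltac:(lra) (proj1 (G_B1 0 abs0_lt_delta)))
    as [V0 HV0].
  set (e := Rmin (Rmin (l1 - 1) (- 1 - l2)) 1 / 2).
  assert (He : 0 < e /\ 2 * e <= l1 - 1 /\ 2 * e <= - 1 - l2 /\ e < 1).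
  { assert (0 < Rmin (Rmin (l1 - 1) (- 1 - l2)) 1) by (repeat apply Rmin_pos; lra).
    pose proof (Rmin_l (Rmin (l1 - 1) (- 1 - l2)) 1). pose proof (Rmin_r (Rmin (l1 - 1) (- 1 - l2)) 1).
    pose proof (Rmin_l (l1 - 1) (- 1 - l2)). pose proof (Rmin_r (l1 - 1) (- 1 - l2)).
    unfold e; lra. }
  destruct (F_near_F0 e ltac:(lra)) as [tau [Htau [Htd K]]].
  exists (1 + e), (Rabs V0 + 1), tau.
  split; [lra|]. split; [pose proof (Rabs_pos V0); lra|]. split; [exact Htau|]. split; [exact Htd|].
  intros t Ht z Hz. destruct (K t Ht) as [Ka [Kb Kc]]. split.
  - unfold Df. destruct (Rle_dec z 0).
    + specialize (Kb z ltac:(lra)). specialize (K1 z ltac:(lra)). apply Rabs_le_between in Kb.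
      rewrite Rabs_right; lra.
    + specialize (Kc z ltac:(lra)). specialize (K2 z ltac:(lra)). apply Rabs_le_between in Kc.
      rewrite Rabs_left; lra.
  - destruct (Ka z Hz) as [_ Kg]. specialize (HV0 z Hz).
    pose proof (Rabs_sub_triang (G t z) (G 0 z) 0). rewrite !Rminus_0_r in H.
    pose proof (Rle_abs V0). lra.
Qed.

Section AlongFilter.
Context {T : Type} {Fi : (T -> Prop) -> Prop} {FF : Filter Fi}.
Variable tt : T -> R.
Hypothesis Htt : tends_to Fi tt 0.

Lemma eventually_param_lt tau : tau > 0 -> Fi (fun x => Rabs (tt x) < tau).
Proof.
  intros H. eapply filter_imp; [|exact (Htt tau H)]. intros x Hx.
  replace (tt x) with (tt x - 0) by ring. exact Hx.
Qed.

Lemma eventually_F_U1 : Fi (fun x => U1 (F (tt x))).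
Proof. eapply filter_imp; [|exact (eventually_param_lt delta delta_pos)]. exact (fun x => F_U1 _). Qed.

Lemma eventually_F_maps_I (yy : T -> R) : Fi (fun x => -1 <= yy x <= 1) ->
  Fi (fun x => -1 <= F (tt x) (yy x) <= 1).
Proof.
  intros HI. eapply filter_imp; [|apply filter_and; [exact HI|exact eventually_F_U1]].
  intros x [Hx HU]. now apply U1_maps_I.
Qed.

Lemma eventually_near_F0 e : e > 0 -> Fi (fun x =>
   (forall y, -1 <= y <= 1 -> Rabs (F (tt x) y - F 0 y) <= e /\ Rabs (G (tt x) y - G 0 y) <= e) /\
   (forall y, -1 <= y <= 0 -> Rabs (Dm (F (tt x)) y - Dm (F 0) y) <= e) /\
   (forall y, 0 <= y <= 1 -> Rabs (Dp (F (tt x)) y - Dp (F 0) y) <= e)).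
Proof.
  intros He. destruct (F_near_F0 e He) as [tau [Htau [_ K]]].
  eapply filter_imp; [|exact (eventually_param_lt tau Htau)]. intros x. apply K.
Qed.

Section Continuity.
Variables (yy : T -> R) (y0 : R).
Hypothesis (Hyy : tends_to Fi yy y0).

Lemma tends_to_F : Fi (fun x => -1 <= yy x <= 1) -> -1 <= y0 <= 1 ->
  tends_to Fi (fun x => F (tt x) (yy x)) (F 0 y0).
Proof.
  intros HI Hy0. apply (tends_to_uniform_comp (fun x => F (tt x)) (F 0) (-1) 1); auto.
  - intros e He. eapply filter_imp; [|exact (eventually_near_F0 e He)].
    intros x [K _] y Hy. apply (K y Hy).
  - exact (proj1 (proj1 (F_U1 0 abs0_lt_delta))).
Qed.

Lemma tends_to_G : Fi (fun x => -1 <= yy x <= 1) -> -1 <= y0 <= 1 ->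
  tends_to Fi (fun x => G (tt x) (yy x)) (G 0 y0).
Proof.
  intros HI Hy0. apply (tends_to_uniform_comp (fun x => G (tt x)) (G 0) (-1) 1); auto.
  - intros e He. eapply filter_imp; [|exact (eventually_near_F0 e He)].
    intros x [K _] y Hy. apply (K y Hy).
  - exact (proj1 (G_B1 0 abs0_lt_delta)).
Qed.

Lemma tends_to_Df : Fi (fun x => -1 <= yy x <= 1) -> -1 <= y0 <= 1 -> y0 <> 0 ->
  tends_to Fi (fun x => Df (F (tt x)) (yy x)) (Df (F 0) y0).
Proof.
  intros HI Hy0 Hn. destruct (F_U1 0 abs0_lt_delta) as [[_ [Cm [Cp _]]] _].
  unfold Df at 2. destruct (Rle_dec y0 0) as [Hle|Hgt].
  - assert (Hlt : Fi (fun x => yy x < 0)) by (apply (tends_to_lt _ y0); [exact Hyy|lra]).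
    apply (tends_to_ext (fun x => Dm (F (tt x)) (yy x))).
    { eapply filter_imp; [|exact Hlt]. intros x E. unfold Df.
      destruct (Rle_dec (yy x) 0); [reflexivity|lra]. }
    apply (tends_to_uniform_comp (fun x => Dm (F (tt x))) (Dm (F 0)) (-1) 0); auto; try lra.
    + intros e He. eapply filter_imp; [|exact (eventually_near_F0 e He)].
      intros x [_ [K _]]. exact K.
    + exact (fun x Hx => proj2 (Cm x Hx)).
    + eapply filter_imp; [|apply filter_and; [exact HI|exact Hlt]]. intros x [E1 E2]; lra.
  - assert (Hgt' : Fi (fun x => 0 < yy x)) by (apply (tends_to_gt _ y0); [exact Hyy|lra]).
    apply (tends_to_ext (fun x => Dp (F (tt x)) (yy x))).
    { eapply filter_imp; [|exact Hgt']. intros x E. unfold Df.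
      destruct (Rle_dec (yy x) 0); [lra|reflexivity]. }
    apply (tends_to_uniform_comp (fun x => Dp (F (tt x))) (Dp (F 0)) 0 1); auto; try lra.
    + intros e He. eapply filter_imp; [|exact (eventually_near_F0 e He)].
      intros x [_ [_ K]]. exact K.
    + exact (fun x Hx => proj2 (Cp x Hx)).
    + eapply filter_imp; [|apply filter_and; [exact HI|exact Hgt']]. intros x [E1 E2]; lra.
Qed.

End Continuity.

Section Iterates.
Variables (yy : T -> R) (y0 : R).
Hypothesis (Hyy : tends_to Fi yy y0) (HI : Fi (fun x => -1 <= yy x <= 1)) (Hy0 : -1 <= y0 <= 1).

Lemma tends_to_iter n :
  tends_to Fi (fun x => Nat.iter n (F (tt x)) (yy x)) (Nat.iter n (F 0) y0) /\
  Fi (fun x => -1 <= Nat.iter n (F (tt x)) (yy x) <= 1).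
Proof.
  induction n as [|n [L1 L2]]; [split; assumption|]. simpl. split.
  - apply tends_to_F; [exact L1|exact L2|]. apply iter_in_I; [apply F_U1, abs0_lt_delta|exact Hy0].
  - now apply eventually_F_maps_I.
Qed.

Lemma tends_to_Dfn n : (forall j, (j < n)%nat -> Nat.iter j (F 0) y0 <> 0) ->
  tends_to Fi (fun x => Dfn (F (tt x)) n (yy x)) (Dfn (F 0) n y0).
Proof.
  induction n as [|n IH]; intros Hz; simpl; [apply tends_to_const|].
  apply tends_to_mult; [apply IH; intros; apply Hz; lia|].
  destruct (tends_to_iter n) as [L1 L2].
  apply tends_to_Df; [exact L1|exact L2| |apply Hz; lia].
  apply iter_in_I; [apply F_U1, abs0_lt_delta|exact Hy0].
Qed.

End Iterates.

Lemma tends_to_Jblock (yy : T -> R) y0 n :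
  tends_to Fi yy y0 -> Fi (fun x => -1 <= yy x <= 1) -> -1 <= y0 <= 1 ->
  (forall j, (S j < n)%nat -> Nat.iter j (F 0) (F 0 y0) <> 0) ->
  tends_to Fi (fun x => Jblock (F (tt x)) (G (tt x)) n (yy x)) (Jblock (F 0) (G 0) n y0).
Proof.
  intros Hy HI Hy0 Hz. pose proof (F_U1 0 abs0_lt_delta) as U0.
  induction n as [|n IH]; unfold Jblock in *; simpl; [apply tends_to_const|].
  apply tends_to_plus; [apply IH; intros; apply Hz; lia|].
  destruct (tends_to_iter yy y0 Hy HI Hy0 n) as [L1 L2].
  apply tends_to_div.
  - apply tends_to_G; [exact L1|exact L2|now apply iter_in_I].
  - apply (tends_to_Dfn (fun x => F (tt x) (yy x)));
      [apply tends_to_F; auto|now apply eventually_F_maps_I|now apply U1_maps_I|].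
    intros j Hj. apply Hz. lia.
  - apply Dfn_neq0; [exact U0|now apply U1_maps_I].
Qed.

End AlongFilter.

Lemma F_param_quotient t0 (phi : R -> R) : Rabs t0 < delta -> continuity_pt phi t0 ->
  (forall t, Rabs t < delta -> -1 <= phi t <= 1) ->
  forall eps, eps > 0 -> exists d, d > 0 /\ forall h, h <> 0 -> Rabs h < d ->
    Rabs ((F (t0 + h) (phi (t0 + h)) - F t0 (phi (t0 + h))) / h - G t0 (phi t0)) < eps.
Proof.
  intros Ht0 Hphi HI eps Heps.
  destruct (F_diff_quotient_close t0 Ht0 (eps / 2) ltac:(lra)) as [eta [Heta K]].
  destruct (cont_on_eps (G t0) (-1) 1 (phi t0) (proj1 (G_B1 t0 Ht0)) (HI t0 Ht0) (eps / 4))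
    as [dG [HdG KG]]; [lra|].
  destruct (continuity_pt_eps phi t0 Hphi dG HdG) as [dp [Hdp Kp]].
  set (d := Rmin (Rmin eta dp) (delta - Rabs t0)).
  assert (Hd : d > 0) by (repeat apply Rmin_pos; lra).
  exists d. split; [exact Hd|]. intros h Hh Hhd.
  pose proof (Rmin_l (Rmin eta dp) (delta - Rabs t0)).
  pose proof (Rmin_r (Rmin eta dp) (delta - Rabs t0)).
  pose proof (Rmin_l eta dp). pose proof (Rmin_r eta dp).
  assert (Hth : Rabs (t0 + h) < delta) by (pose proof (Rabs_triang t0 h); unfold d in *; lra).
  destruct (K h Hh ltac:(unfold d in *; lra) Hth) as [Kq _].
  specialize (Kq (phi (t0 + h)) (HI _ Hth)).
  specialize (KG (phi (t0 + h)) (HI _ Hth) (Kp h ltac:(unfold d in *; lra))).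
  pose proof (Rabs_sub_triang ((F (t0 + h) (phi (t0 + h)) - F t0 (phi (t0 + h))) / h)
                (G t0 (phi (t0 + h))) (G t0 (phi t0))).
  lra.
Qed.

Lemma derivable_F_comp (phi : R -> R) t0 phi' :
  Rabs t0 < delta -> derivable_pt_lim phi t0 phi' ->
  (forall t, Rabs t < delta -> -1 <= phi t <= 1) -> phi t0 <> 0 ->
  derivable_pt_lim (fun t => F t (phi t)) t0 (G t0 (phi t0) + Df (F t0) (phi t0) * phi').
Proof.
  intros Ht0 Hphi HI Hn eps Heps.
  assert (Hc : continuity_pt phi t0) by exact (derivable_continuous_pt _ _ (exist _ phi' Hphi)).
  destruct (lap_hderiv (F t0) (phi t0) (F_U1 t0 Ht0) (HI t0 Ht0) Hn)
    as [a [b [Hab [Hd Hlap]]]].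
  (* near [t0] the orbit point stays on the lap of [phi t0], where [F t0] is differentiable *)
  assert (Hstay : exists d, d > 0 /\ forall h, Rabs h < d -> a <= phi (t0 + h) <= b).
  { destruct (continuity_pt_eps phi t0 Hc (Rabs (phi t0)) ltac:(now apply Rabs_pos_lt))
      as [d [Hd0 Kd]].
    exists (Rmin d (delta - Rabs t0)). split; [apply Rmin_pos; lra|]. intros h Hh.
    pose proof (Rmin_l d (delta - Rabs t0)). pose proof (Rmin_r d (delta - Rabs t0)).
    apply Hlap; [apply HI; pose proof (Rabs_triang t0 h); lra|apply Kd; lra]. }
  destruct (derivable_pt_lim_comp_hderiv (F t0) phi a b t0 _ phi' Hd Hphi Hstay
              (eps / 2) ltac:(lra)) as [[d1 Hd1] K1].
  destruct (F_param_quotient t0 phi Ht0 Hc HI (eps / 2) ltac:(lra)) as [d2 [Hd2 K2]].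
  exists (mkposreal (Rmin d1 d2) (Rmin_pos _ _ Hd1 Hd2)). intros h Hh Hhd. simpl in Hhd.
  specialize (K1 h Hh (Rlt_le_trans _ _ _ Hhd (Rmin_l _ _))).
  specialize (K2 h Hh (Rlt_le_trans _ _ _ Hhd (Rmin_r _ _))).
  replace ((F (t0 + h) (phi (t0 + h)) - F t0 (phi t0)) / h
           - (G t0 (phi t0) + Df (F t0) (phi t0) * phi'))
    with (((F (t0 + h) (phi (t0 + h)) - F t0 (phi (t0 + h))) / h - G t0 (phi t0))
          + ((F t0 (phi (t0 + h)) - F t0 (phi t0)) / h - Df (F t0) (phi t0) * phi'))
    by (field; exact Hh).
  eapply Rle_lt_trans; [apply Rabs_triang|lra].
Qed.

Definition crit_orbit (k : nat) (t : R) : R := Nat.iter k (F t) 0.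

Lemma crit_orbit_in_I k t : Rabs t < delta -> -1 <= crit_orbit k t <= 1.
Proof. intros H. apply iter_in_I; [now apply F_U1|lra]. Qed.

Lemma derivable_F_at_0 t0 : Rabs t0 < delta -> derivable_pt_lim (fun t => F t 0) t0 (G t0 0).
Proof.
  intros Ht0 eps Heps.
  destruct (F_param_quotient t0 (fun _ => 0) Ht0 (continuity_pt_const (fun _ => 0) t0 (fun _ _ => eq_refl))
              (fun _ _ => ltac:(lra)) eps Heps) as [d [Hd K]].
  exists (mkposreal d Hd). exact K.
Qed.

Lemma crit_orbit_derivative n t0 : Rabs t0 < delta ->
  (forall j, (1 <= j <= n)%nat -> crit_orbit j t0 <> 0) ->
  derivable_pt_lim (crit_orbit (S n)) t0
    (Dfn (F t0) n (F t0 0) * sumR (S n) (Jterm (F t0) (G t0))).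
Proof.
  intros Ht0. set (f := F t0). induction n as [|n IH]; intros Hz.
  - unfold Jterm. simpl. replace (1 * (0 + G t0 0 / 1)) with (G t0 0) by field.
    now apply derivable_F_at_0.
  - assert (Hn0 : crit_orbit (S n) t0 <> 0) by (apply Hz; lia).
    pose proof (derivable_F_comp (crit_orbit (S n)) t0 _ Ht0 (IH ltac:(intros; apply Hz; lia))
                  (crit_orbit_in_I (S n)) Hn0) as C.
    assert (E : Nat.iter n f (f 0) = crit_orbit (S n) t0)
      by (unfold crit_orbit, f; now rewrite Nat.iter_succ_r).
    assert (HD : Dfn f n (f 0) <> 0).
    { apply Dfn_neq0; [now apply F_U1|]. apply U1_maps_I; [now apply F_U1|lra]. }
    assert (HDf : Df f (crit_orbit (S n) t0) <> 0).
    { apply Df_neq0; [now apply F_U1|now apply crit_orbit_in_I]. }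
    replace (Dfn f (S n) (f 0) * sumR (S (S n)) (Jterm f (G t0)))
      with (G t0 (crit_orbit (S n) t0)
            + Df f (crit_orbit (S n) t0) * (Dfn f n (f 0) * sumR (S n) (Jterm f (G t0)))).
    { exact C. }
    assert (EJ : Jterm f (G t0) (S n)
                 = G t0 (crit_orbit (S n) t0) / (Dfn f n (f 0) * Df f (crit_orbit (S n) t0))).
    { unfold Jterm. cbn [Dfn]. now rewrite E. }
    change (sumR (S (S n)) (Jterm f (G t0)))
      with (sumR (S n) (Jterm f (G t0)) + Jterm f (G t0) (S n)).
    cbn [Dfn]. rewrite EJ, E. field. split; assumption.
Qed.

Section Expansion.
Variables (lam V tau : R).
Hypothesis (Hlam : lam > 1) (Htau : tau <= delta).
Hypothesis Hexp : forall t, Rabs t < tau -> forall z, -1 <= z <= 1 ->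
  lam <= Rabs (Df (F t) z) /\ Rabs (G t z) <= V.

Lemma Dfn_expansion t n y : Rabs t < tau -> -1 <= y <= 1 ->
  lam ^ n <= Rabs (Dfn (F t) n y).
Proof.
  intros Ht Hy. apply Dfn_abs_ge_pow; [lra|]. intros k.
  apply Hexp; [exact Ht|]. apply iter_in_I; [apply F_U1; lra|exact Hy].
Qed.

Lemma Jterm_geometric_bound t i : Rabs t < tau ->
  Rabs (Jterm (F t) (G t) i) <= V * (/ lam) ^ i.
Proof.
  intros Ht. unfold Jterm.
  assert (HU : U1 (F t)) by (apply F_U1; lra).
  assert (HD := Dfn_expansion t i (F t 0) Ht (U1_maps_I _ HU 0 ltac:(lra))).
  assert (Hp : lam ^ i > 0) by (apply pow_lt; lra).
  unfold Rdiv. rewrite Rabs_mult, Rabs_inv, pow_inv.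
  apply Rmult_le_compat; [apply Rabs_pos|apply Rlt_le, Rinv_0_lt_compat; lra| |].
  - apply Hexp; [exact Ht|]. apply iter_in_I; [exact HU|lra].
  - now apply Rinv_le_contravar.
Qed.

Lemma Jsum_tail_bound t N k : Rabs t < tau -> (N <= k)%nat ->
  Rabs (sumR k (Jterm (F t) (G t)) - sumR N (Jterm (F t) (G t)))
    <= V / Rabs (Dfn (F t) N (F t 0)) / (1 - / lam).
Proof.
  intros Ht Hk. set (f := F t).
  assert (HU : U1 f) by (apply F_U1; lra).
  assert (Hf0 : -1 <= f 0 <= 1) by (apply U1_maps_I; [exact HU|lra]).
  assert (HEN : Rabs (Dfn f N (f 0)) > 0) by (apply Rabs_pos_lt, Dfn_neq0; assumption).
  assert (Hil : 0 < / lam < 1).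
  { split; [apply Rinv_0_lt_compat; lra|]. rewrite <- Rinv_1. apply Rinv_lt_contravar; lra. }
  apply (sumR_tail_geom _ _ (/ lam)); [lra| | |exact Hk].
  { pose proof (Hexp t Ht 0 ltac:(lra)) as [_ HV]. pose proof (Rabs_pos (G t 0)).
    apply Rdiv_le_0_compat; lra. }
  intros i Hi. unfold Jterm.
  replace (Dfn f i (f 0)) with (Dfn f N (f 0) * Dfn f (i - N) (Nat.iter N f (f 0)))
    by (rewrite <- Dfn_add; f_equal; lia).
  assert (HL : lam ^ (i - N) <= Rabs (Dfn f (i - N) (Nat.iter N f (f 0))))
    by (apply Dfn_expansion; [exact Ht|now apply iter_in_I]).
  assert (HLp : lam ^ (i - N) > 0) by (apply pow_lt; lra).
  assert (HG : Rabs (G t (Nat.iter i f 0)) <= V) by (apply Hexp; [exact Ht|apply iter_in_I; [exact HU|lra]]).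
  unfold Rdiv. rewrite Rabs_mult, Rabs_inv, Rabs_mult, Rinv_mult, pow_inv.
  rewrite Rmult_assoc. apply Rmult_le_compat; [apply Rabs_pos| |exact HG|].
  - apply Rlt_le, Rmult_lt_0_compat; apply Rinv_0_lt_compat; lra.
  - apply Rmult_le_compat_l; [apply Rlt_le, Rinv_0_lt_compat; lra|].
    now apply Rinv_le_contravar.
Qed.

Lemma Jsum_tail_uniformly_small e : e > 0 -> exists N, forall t k, Rabs t < tau -> (N <= k)%nat ->
  Rabs (sumR k (Jterm (F t) (G t)) - sumR N (Jterm (F t) (G t))) < e.
Proof.
  intros He.
  assert (Hil : 0 < 1 - / lam).
  { enough (/ lam < 1) by lra. rewrite <- Rinv_1. apply Rinv_lt_contravar; lra. }
  destruct (pow_large lam (V / ((1 - / lam) * e)) Hlam) as [N HN].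
  exists N. intros t k Ht Hk. eapply Rle_lt_trans; [exact (Jsum_tail_bound t N k Ht Hk)|].
  assert (HLN := Dfn_expansion t N (F t 0) Ht (U1_maps_I _ (F_U1 t ltac:(lra)) 0 ltac:(lra))).
  specialize (HN N (le_n N)).
  assert (Hpos : 0 < lam ^ N) by (apply pow_lt; lra).
  assert (HV : 0 <= V).
  { pose proof (Hexp t Ht 0 ltac:(lra)) as [_ HV]. pose proof (Rabs_pos (G t 0)). lra. }
  apply Rle_lt_trans with (V / lam ^ N / (1 - / lam)).
  - unfold Rdiv. apply Rmult_le_compat_r; [apply Rlt_le, Rinv_0_lt_compat; lra|].
    apply Rmult_le_compat_l; [lra|]. now apply Rinv_le_contravar.
  - apply (Rmult_lt_reg_r (lam ^ N * (1 - / lam))); [nra|].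
    replace (V / lam ^ N / (1 - / lam) * (lam ^ N * (1 - / lam))) with V by (field; lra).
    apply (Rmult_lt_compat_l ((1 - / lam) * e)) in HN; [|nra].
    replace ((1 - / lam) * e * (V / ((1 - / lam) * e))) with V in HN by (field; lra).
    nra.
Qed.

End Expansion.

Lemma partial_sums_tend_to_J : ~ periodic (F 0) ->
  is_lim_seq (fun k => sumR k (Jterm (F 0) (G 0))) (J (F 0) (G 0)).
Proof.
  intros Hnp.
  destruct uniform_expansion as [lam [V [tau [Hl [HV [Ht [Htd HU]]]]]]].
  assert (Hr : 0 < / lam < 1).
  { split; [apply Rinv_0_lt_compat; lra|]. rewrite <- Rinv_1. apply Rinv_lt_contravar; lra. }
  assert (Hex : ex_series (Jterm (F 0) (G 0))).
  { apply (@ex_series_le R_AbsRing R_CompleteNormedModule _ (fun n => V * (/ lam) ^ n)).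
    - intros n. apply (Jterm_geometric_bound lam V tau Hl Htd HU). rewrite Rabs_R0. exact Ht.
    - apply (ex_series_scal_l V (fun n => (/ lam) ^ n)). apply ex_series_geom.
      rewrite Rabs_right; lra. }
  rewrite (J_not_periodic _ _ Hnp). apply is_lim_seq_incr_1.
  apply (is_lim_seq_ext (sum_n (Jterm (F 0) (G 0)))).
  - intros n. now rewrite sumR_sum_n.
  - now apply Series_correct.
Qed.


Lemma partial_sums_away_from_0 : ~ periodic (F 0) -> J (F 0) (G 0) <> 0 ->
  exists N d, d > 0 /\ forall t k, Rabs t < d -> (N <= k)%nat ->
    Rabs (J (F 0) (G 0)) / 2 < Rabs (sumR k (Jterm (F t) (G t))).
Proof.
  intros Hnp HJ.
  destruct uniform_expansion as [lam [V [tau [Hl [HV [Htau [Htd HU]]]]]]].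
  set (Jv := J (F 0) (G 0)) in *.
  assert (HJp : Rabs Jv > 0) by now apply Rabs_pos_lt.
  destruct (Jsum_tail_uniformly_small lam V tau Hl Htd HU (Rabs Jv / 8) ltac:(lra))
    as [N Htail].
  assert (HJN : Rabs (Jv - sumR N (Jterm (F 0) (G 0))) <= Rabs Jv / 8).
  { apply (is_lim_seq_dist_le (fun k => sumR k (Jterm (F 0) (G 0)))).
    - now apply partial_sums_tend_to_J.
    - intros k Hk. apply Rlt_le, Htail; [rewrite Rabs_R0; exact Htau|exact Hk]. }
  assert (HC : tends_to (locally 0) (fun t => Jblock (F t) (G t) N 0) (Jblock (F 0) (G 0) N 0)).
  { apply (tends_to_Jblock (fun t => t) tends_to_locally_id (fun _ => 0));
      [apply tends_to_const|apply filter_forall; intros; lra|lra|].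
    intros j Hj Hz. apply Hnp. exists (S j). split; [lia|]. now rewrite Nat.iter_succ_r. }
  destruct (tends_to_locally_eps _ _ HC (Rabs Jv / 8) ltac:(lra)) as [d [Hd K]].
  exists N, (Rmin tau d). split; [now apply Rmin_pos|]. intros t k Ht Hk.
  pose proof (Rmin_l tau d). pose proof (Rmin_r tau d).
  specialize (K t ltac:(lra)). specialize (Htail t k ltac:(lra) Hk).
  change (Rabs (sumR N (Jterm (F t) (G t)) - sumR N (Jterm (F 0) (G 0))) < Rabs Jv / 8) in K.
  pose proof (Rabs_sub_triang Jv (sumR N (Jterm (F 0) (G 0))) 0).
  pose proof (Rabs_sub_triang (sumR N (Jterm (F 0) (G 0))) (sumR N (Jterm (F t) (G t))) 0).
  pose proof (Rabs_sub_triang (sumR N (Jterm (F t) (G t))) (sumR k (Jterm (F t) (G t))) 0).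
  rewrite !Rminus_0_r in *.
  rewrite (Rabs_minus_sym (sumR N (Jterm (F 0) (G 0)))) in *.
  rewrite (Rabs_minus_sym (sumR N (Jterm (F t) (G t)))) in *.
  lra.
Qed.

Lemma crit_orbit_slope_bound n a b L : -delta < a -> a < b -> b < delta ->
  (forall s j, a <= s <= b -> (1 <= j <= n)%nat -> crit_orbit j s <> 0) ->
  (forall c, a <= c <= b ->
     L <= Rabs (Dfn (F c) n (F c 0) * sumR (S n) (Jterm (F c) (G c)))) ->
  L * (b - a) <= 2.
Proof.
  intros Ha Hab Hb Hz HL.
  destruct (MVT_cor2 (crit_orbit (S n))
              (fun c => Dfn (F c) n (F c 0) * sumR (S n) (Jterm (F c) (G c))) a b Hab)
    as [c [Hc Hc']].
  { intros c Hc. apply crit_orbit_derivative; [apply Rabs_def1; lra|].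
    intros j Hj. apply Hz; [exact Hc|exact Hj]. }
  pose proof (crit_orbit_in_I (S n) a ltac:(apply Rabs_def1; lra)).
  pose proof (crit_orbit_in_I (S n) b ltac:(apply Rabs_def1; lra)).
  apply Rle_trans with (Rabs (crit_orbit (S n) b - crit_orbit (S n) a)).
  - rewrite Hc, Rabs_mult, (Rabs_right (b - a)) by lra.
    apply Rmult_le_compat_r; [lra|apply HL; lra].
  - apply Rabs_le. lra.
Qed.

Lemma periodic_parameters_near_0 : ~ periodic (F 0) -> J (F 0) (G 0) <> 0 ->
  forall eps, eps > 0 -> exists t, 0 < t < eps /\ Rabs t < delta /\ periodic (F t).
Proof.
  intros Hnp HJ eps Heps.
  destruct (partial_sums_away_from_0 Hnp HJ) as [N [d [Hd HS]]].
  destruct uniform_expansion as [lam [V [tau [Hl [HV [Htau [Htd HU]]]]]]].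
  set (Jv := J (F 0) (G 0)) in *.
  assert (HJp : Rabs Jv > 0) by now apply Rabs_pos_lt.
  set (e := Rmin eps (Rmin tau d) / 2).
  assert (He : 0 < e /\ e < eps /\ e < tau /\ e < d).
  { assert (0 < Rmin eps (Rmin tau d)) by (repeat apply Rmin_pos; lra).
    pose proof (Rmin_l eps (Rmin tau d)). pose proof (Rmin_r eps (Rmin tau d)).
    pose proof (Rmin_l tau d). pose proof (Rmin_r tau d). unfold e; lra. }
  apply NNPP. intro Hno.
  (* with no periodic parameter in [[e/2, e]] the critical orbit would have a huge slope there *)
  destruct (pow_large lam (8 / (Rabs Jv * e)) Hl) as [n0 Hn0].
  set (n := max n0 N). specialize (Hn0 n ltac:(unfold n; lia)).
  assert (Hslope : lam ^ n * (Rabs Jv / 2) * (e - e / 2) <= 2).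
  2: { apply (Rmult_lt_compat_r (Rabs Jv * e / 4)) in Hn0; [|nra].
       replace (8 / (Rabs Jv * e) * (Rabs Jv * e / 4)) with 2 in Hn0 by (field; lra). nra. }
  pose proof delta_pos.
  apply (crit_orbit_slope_bound n); [lra|lra|lra| |].
  - intros s j Hs Hj Z. apply Hno. exists s. split; [lra|]. split; [rewrite Rabs_right; lra|].
    exists j. split; [lia|exact Z].
  - intros c Hc. rewrite Rabs_mult.
    apply Rmult_le_compat; [apply pow_le; lra|lra| |].
    + apply (Dfn_expansion lam V tau Hl Htd HU); [rewrite Rabs_right; lra|].
      apply U1_maps_I; [apply F_U1; rewrite Rabs_right; lra|lra].
    + apply Rlt_le, HS; [rewrite Rabs_right; lra|unfold n; lia].
Qed.

Lemma Df_near_critical mu' : mu' < Rmin (Rabs (Dp (F 0) 0)) (Rabs (Dm (F 0) 0)) ->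
  exists d, d > 0 /\ forall t z, Rabs t < d -> Rabs z < d -> -1 <= z <= 1 ->
    mu' <= Rabs (Df (F t) z).
Proof.
  intros Hmu.
  pose proof (Rmin_l (Rabs (Dp (F 0) 0)) (Rabs (Dm (F 0) 0))).
  pose proof (Rmin_r (Rabs (Dp (F 0) 0)) (Rabs (Dm (F 0) 0))).
  set (e := Rmin (Rabs (Dp (F 0) 0)) (Rabs (Dm (F 0) 0)) - mu') in *.
  destruct (F_near_F0 (e / 2) ltac:(unfold e; lra)) as [tau [Htau [_ K]]].
  destruct (F_U1 0 abs0_lt_delta) as [[_ [Cm [Cp _]]] _].
  destruct (cont_on_eps (Dm (F 0)) (-1) 0 0 (fun x Hx => proj2 (Cm x Hx)) ltac:(lra) (e / 2))
    as [d1 [Hd1 K1]]; [unfold e; lra|].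
  destruct (cont_on_eps (Dp (F 0)) 0 1 0 (fun x Hx => proj2 (Cp x Hx)) ltac:(lra) (e / 2))
    as [d2 [Hd2 K2]]; [unfold e; lra|].
  exists (Rmin tau (Rmin d1 d2)). split; [repeat apply Rmin_pos; lra|].
  intros t z Ht Hz HI.
  pose proof (Rmin_l tau (Rmin d1 d2)). pose proof (Rmin_r tau (Rmin d1 d2)).
  pose proof (Rmin_l d1 d2). pose proof (Rmin_r d1 d2).
  destruct (K t ltac:(lra)) as [_ [Km Kp]]. unfold Df. destruct (Rle_dec z 0).
  - specialize (Km z ltac:(lra)). specialize (K1 z ltac:(lra) ltac:(rewrite Rminus_0_r; lra)).
    pose proof (Rabs_sub_triang (Dm (F 0) 0) (Dm (F 0) z) 0).
    pose proof (Rabs_sub_triang (Dm (F 0) z) (Dm (F t) z) 0).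
    rewrite !Rminus_0_r, (Rabs_minus_sym (Dm (F 0) 0)) in *.
    rewrite (Rabs_minus_sym (Dm (F 0) z)) in *. unfold e in *. lra.
  - specialize (Kp z ltac:(lra)). specialize (K2 z ltac:(lra) ltac:(rewrite Rminus_0_r; lra)).
    pose proof (Rabs_sub_triang (Dp (F 0) 0) (Dp (F 0) z) 0).
    pose proof (Rabs_sub_triang (Dp (F 0) z) (Dp (F t) z) 0).
    rewrite !Rminus_0_r, (Rabs_minus_sym (Dp (F 0) 0)) in *.
    rewrite (Rabs_minus_sym (Dp (F 0) z)) in *. unfold e in *. lra.
Qed.

Lemma crit_orbit_returns p M0 dl : dl > 0 -> Nat.iter p (F 0) 0 = 0 ->
  exists tau, tau > 0 /\ forall t m, Rabs t < tau -> (m <= M0)%nat ->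
    Rabs (crit_orbit (m * p) t) < dl.
Proof.
  intros Hdl Hp. induction M0 as [|M0 [tau [Htau K]]].
  - exists 1. split; [lra|]. intros t m Ht Hm. replace m with 0%nat by lia.
    unfold crit_orbit. simpl. rewrite Rabs_R0. exact Hdl.
  - assert (HI0 : locally 0 (fun x : R => -1 <= (fun _ : R => 0) x <= 1))
      by (apply filter_forall; intros; simpl; lra).
    destruct (tends_to_iter (fun t => t) tends_to_locally_id (fun _ => 0) 0 (tends_to_const 0)
                HI0 ltac:(lra) (S M0 * p)) as [L _].
    rewrite iter_mul_period in L by exact Hp.
    destruct (tends_to_locally_eps _ _ L dl Hdl) as [d [Hd Kd]].
    exists (Rmin tau d). split; [now apply Rmin_pos|]. intros t m Ht Hm.
    pose proof (Rmin_l tau d). pose proof (Rmin_r tau d).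
    destruct (Nat.eq_dec m (S M0)) as [->|NE]; [|apply K; lra || lia].
    specialize (Kd t ltac:(lra)). rewrite Rminus_0_r in Kd. exact Kd.
Qed.

Lemma block_uniform p eta Lam : prime_period (F 0) p -> eta > 0 ->
  Lam < Rabs (Dfn (F 0) (p - 1) (F 0 0)) ->
  exists d, d > 0 /\ forall t y, Rabs t < d -> Rabs y < d ->
   (forall j, (1 <= j < p)%nat -> Nat.iter j (F t) y <> 0) /\
   Rabs (Jblock (F t) (G t) p y - sumR p (Jterm (F 0) (G 0))) < eta /\
   Lam < Rabs (Dfn (F t) (p - 1) (F t y)).
Proof.
  intros [Hp1 [Hp2 Hp3]] Heta HL.
  assert (HI : locally00 (fun x => -1 <= snd x <= 1)).
  { eapply filter_imp; [|exact (tends_to_snd 1 ltac:(lra))]. intros x E. simpl in E.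
    rewrite Rminus_0_r in E. apply Rabs_def2 in E. lra. }
  assert (Hret : locally00 (fun x => forall j, (j < p)%nat -> (1 <= j)%nat ->
                                     Nat.iter j (F (fst x)) (snd x) <> 0)).
  { apply (filter_forall_lt_nat (fun j x => (1 <= j)%nat -> Nat.iter j (F (fst x)) (snd x) <> 0)).
    intros j Hj. destruct j as [|j]; [apply filter_forall; intros; lia|].
    destruct (tends_to_iter fst tends_to_fst snd 0 tends_to_snd HI ltac:(lra) (S j)) as [L _].
    assert (Hnz : Nat.iter (S j) (F 0) 0 <> 0) by (apply Hp3; lia).
    eapply filter_imp; [|exact (tends_to_abs_gt _ _ 0 L ltac:(now apply Rabs_pos_lt))].
    intros x E _ Z. cbv beta in E. rewrite Z, Rabs_R0 in E. lra. }
  assert (Hz : forall j, (S j < p)%nat -> Nat.iter j (F 0) (F 0 0) <> 0).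
  { intros j Hj. rewrite <- Nat.iter_succ_r. apply Hp3; lia. }
  assert (HB := tends_to_Jblock fst tends_to_fst snd 0 p tends_to_snd HI ltac:(lra) Hz).
  assert (HD := tends_to_Dfn fst tends_to_fst (fun x => F (fst x) (snd x)) (F 0 0)
                  (tends_to_F fst tends_to_fst snd 0 tends_to_snd HI ltac:(lra))
                  (eventually_F_maps_I fst tends_to_fst snd HI)
                  (U1_maps_I _ (F_U1 0 abs0_lt_delta) 0 ltac:(lra)) (p - 1)
                  (fun j Hj => Hz j ltac:(lia))).
  destruct (locally00_eps _ (filter_and _ _ Hret
              (filter_and _ _ (HB eta Heta) (tends_to_abs_gt _ _ _ HD HL)))) as [d [Hd K]].
  exists d. split; [exact Hd|]. intros t y Ht Hy. destruct (K t y Ht Hy) as [K1 [K2 K3]].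
  split; [|split; assumption]. intros j [Hj1 Hj2]. now apply K1.
Qed.

Section PeriodicCase.
Variables (p : nat) (Jv ka Lam mu eta dl lam V tau : R).
Hypothesis (Hp : (1 <= p)%nat) (Hka : ka <= Lam * mu) (HLam : 0 < Lam) (Hmu : 0 < mu)
  (Hlam : lam > 1) (Htau : tau <= delta).
Hypothesis Hexp : forall t, Rabs t < tau -> forall z, -1 <= z <= 1 ->
  lam <= Rabs (Df (F t) z) /\ Rabs (G t z) <= V.
Hypothesis Hblock : forall t y, Rabs t < tau -> Rabs y < dl ->
  (forall j, (1 <= j < p)%nat -> Nat.iter j (F t) y <> 0) /\
  Rabs (Jblock (F t) (G t) p y - Jv) < eta /\ Lam < Rabs (Dfn (F t) (p - 1) (F t y)).
Hypothesis Hcrit : forall t z, Rabs t < tau -> Rabs z < dl -> -1 <= z <= 1 ->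
  mu <= Rabs (Df (F t) z).

Lemma perturbed_block t r m : Rabs t < tau -> prime_period (F t) r ->
  Rabs (crit_orbit (m * p) t) < dl -> (m * p < r)%nat ->
  ((m + 1) * p <= r)%nat /\
  sumR ((m + 1) * p) (Jterm (F t) (G t)) - sumR (m * p) (Jterm (F t) (G t))
    = Jblock (F t) (G t) p (crit_orbit (m * p) t) / Dfn (F t) (m * p) (F t 0) /\
  Rabs (Jblock (F t) (G t) p (crit_orbit (m * p) t) - Jv) <= eta /\
  (Rabs (crit_orbit ((m + 1) * p) t) < dl ->
     Rabs (Dfn (F t) ((m + 1) * p) (F t 0)) >= ka * Rabs (Dfn (F t) (m * p) (F t 0))) /\
  Rabs (Dfn (F t) ((m + 1) * p) (F t 0)) >= Rabs (Dfn (F t) (m * p) (F t 0)).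
Proof.
  intros Ht [_ [Hr0 _]] Hy Hmr.
  assert (HU : U1 (F t)) by (apply F_U1; lra).
  replace ((m + 1) * p)%nat with (m * p + p)%nat by lia.
  set (f := F t) in *. set (q := (m * p)%nat) in *. set (Y := crit_orbit q t) in *.
  assert (HY : -1 <= Y <= 1) by (apply crit_orbit_in_I; lra).
  destruct (Hblock t Y Ht Hy) as [Ba [Bb Bc]]. fold f in Ba, Bb, Bc.
  assert (HE : Rabs (Dfn f q (f 0)) >= 0) by (apply Rle_ge, Rabs_pos).
  split; [exact (no_return_inside_block f q p r Ba Hr0 Hmr)|].
  split; [|split; [apply Rlt_le; exact Bb|split]].
  - rewrite sumR_Jterm_split; [change (Nat.iter q f 0) with Y; ring| |].
    + apply Dfn_neq0; [exact HU|apply U1_maps_I; auto; lra].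
    + intros i Hi. apply Dfn_neq0; [exact HU|now apply U1_maps_I].
  - intros Hy'. rewrite (Dfn_block f q p Hp), !Rabs_mult.
    assert (HD1 : mu <= Rabs (Df f (crit_orbit (q + p) t)))
      by (apply Hcrit; [exact Ht|exact Hy'|apply crit_orbit_in_I; lra]).
    assert (ka <= Rabs (Dfn f (p - 1) (f Y)) * Rabs (Df f (crit_orbit (q + p) t))).
    { apply Rle_trans with (Lam * mu); [exact Hka|apply Rmult_le_compat; lra]. }
    change (Nat.iter q f 0) with Y. change (Nat.iter (q + p) f 0) with (crit_orbit (q + p) t).
    nra.
  - rewrite Dfn_add, Nat.iter_swap, Rabs_mult. change (Nat.iter q f 0) with Y.
    assert (1 <= Rabs (Dfn f p (f Y))).
    { apply Rle_trans with (lam ^ p); [apply pow_R1_Rle; lra|].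
      apply (Dfn_expansion lam V tau Hlam Htau Hexp); [exact Ht|now apply U1_maps_I]. }
    nra.
Qed.

Lemma perturbed_sum_neq0 t r M0 : Rabs t < tau -> prime_period (F t) r ->
  0 < dl -> 2 < ka -> 0 <= eta ->
  (forall m, (m <= M0)%nat -> Rabs (crit_orbit (m * p) t) < dl) ->
  (Rabs Jv - eta) - (Rabs Jv + eta) / (ka - 1) - V / (1 - / lam) / ka ^ M0 > 0 ->
  sumR r (Jterm (F t) (G t)) <> 0.
Proof.
  intros Ht Hr Hdl Hka2 Heta HM0 Hnum.
  assert (HUt : U1 (F t)) by (apply F_U1; lra).
  assert (HDt : forall i, Dfn (F t) i (F t 0) <> 0).
  { intros i. apply Dfn_neq0; [exact HUt|apply U1_maps_I; auto; lra]. }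
  assert (Hil : 0 < 1 - / lam).
  { enough (/ lam < 1) by lra. rewrite <- Rinv_1. apply Rinv_lt_contravar; lra. }
  assert (HV : 0 <= V).
  { pose proof (Hexp t Ht 0 ltac:(lra)) as [_ HV]. pose proof (Rabs_pos (G t 0)). lra. }
  apply (shadowing_sum_neq0 (fun i => crit_orbit i t) (fun i => Dfn (F t) i (F t 0))
           (Jterm (F t) (G t)) (fun m => Jblock (F t) (G t) p (crit_orbit (m * p) t))
           p r dl ka eta Jv) with (M0 := M0) (W := V / (1 - / lam));
    try assumption; try reflexivity.
  - apply Hr.
  - intros m Hy Hmr. now apply (perturbed_block t r m).
  - apply Rdiv_le_0_compat; lra.
  - intros N HN.
    assert (Rabs (Dfn (F t) N (F t 0)) > 0) by now apply Rabs_pos_lt.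
    replace (V / (1 - / lam) / Rabs (Dfn (F t) N (F t 0)))
      with (V / Rabs (Dfn (F t) N (F t 0)) / (1 - / lam)) by (field; lra).
    exact (Jsum_tail_bound lam V tau Hlam Htau Hexp t N r Ht HN).
Qed.

End PeriodicCase.

Lemma perturbed_J_neq0 p : prime_period (F 0) p ->
  Rabs (Dfn (F 0) (p - 1) (F 0 0)) * Rmin (Rabs (Dp (F 0) 0)) (Rabs (Dm (F 0) 0)) > 2 ->
  sumR p (Jterm (F 0) (G 0)) <> 0 ->
  exists tau, tau > 0 /\ forall t r, Rabs t < tau -> prime_period (F t) r ->
    sumR r (Jterm (F t) (G t)) <> 0.
Proof.
  intros Hpp Hgood HJ. pose proof Hpp as [Hp1 [Hp0 _]].
  destruct (shadowing_constants _ _ _ HJ (Rabs_pos _) (Rmin_glb _ _ _ (Rabs_pos _) (Rabs_pos _))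
              Hgood) as [ka [Lam [mu [eta [Hka2 [HLam [Hmu [Hka [Heta Hnum]]]]]]]]].
  destruct uniform_expansion as [lam [V [tau1 [Hl [HV [Ht1 [Htd HU]]]]]]].
  assert (Hil : 0 < 1 - / lam).
  { enough (/ lam < 1) by lra. rewrite <- Rinv_1. apply Rinv_lt_contravar; lra. }
  (* [M0] returns of the unperturbed orbit suffice to make the remaining tail negligible *)
  destruct (pow_large ka (V / (1 - / lam) / eta) ltac:(lra)) as [M0 HM0].
  specialize (HM0 M0 (le_n _)).
  assert (HWk : V / (1 - / lam) / ka ^ M0 <= eta).
  { assert (0 < ka ^ M0) by (apply pow_lt; lra).
    apply (Rmult_le_reg_r (ka ^ M0 / eta)); [apply Rdiv_lt_0_compat; lra|].
    replace (V / (1 - / lam) / ka ^ M0 * (ka ^ M0 / eta)) with (V / (1 - / lam) / eta)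
      by (field; lra).
    replace (eta * (ka ^ M0 / eta)) with (ka ^ M0) by (field; lra). lra. }
  destruct (block_uniform p eta Lam Hpp Heta ltac:(lra)) as [d [Hd Kb]].
  destruct (Df_near_critical mu ltac:(lra)) as [dc [Hdc Kc]].
  set (dl := Rmin d dc).
  assert (Hdl : dl > 0) by now apply Rmin_pos.
  destruct (crit_orbit_returns p M0 dl Hdl Hp0) as [tauM [HtauM KM]].
  set (tau := Rmin (Rmin tau1 d) (Rmin dc tauM)).
  assert (Htau : 0 < tau /\ tau <= tau1 /\ tau <= d /\ tau <= dc /\ tau <= tauM /\ dl <= d /\ dl <= dc).
  { pose proof (Rmin_l (Rmin tau1 d) (Rmin dc tauM)). pose proof (Rmin_r (Rmin tau1 d) (Rmin dc tauM)).
    pose proof (Rmin_l tau1 d). pose proof (Rmin_r tau1 d).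
    pose proof (Rmin_l dc tauM). pose proof (Rmin_r dc tauM).
    pose proof (Rmin_l d dc). pose proof (Rmin_r d dc).
    split; [repeat apply Rmin_pos; lra|]. unfold tau, dl. lra. }
  exists tau. split; [lra|]. intros t r Ht Hr.
  apply (perturbed_sum_neq0 p (sumR p (Jterm (F 0) (G 0))) ka Lam mu eta dl lam V tau)
    with (M0 := M0); try assumption; try lra.
  - intros t' z Ht' Hz. apply HU; [lra|exact Hz].
  - intros t' y Ht' Hy'. apply Kb; lra.
  - intros t' z Ht' Hz HIz. apply Kc; lra.
  - intros m Hm. apply KM; [lra|exact Hm].
  - apply Hnum. exact HWk.
Qed.

Section NonPeriodic.
Variable tau : R.
Hypothesis (Htau : tau <= delta).
Hypothesis HJ : forall t r, Rabs t < tau -> prime_period (F t) r -> sumR r (Jterm (F t) (G t)) <> 0.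

Lemma crit_orbit_not_identically_0 n a b : 0 < a < b -> b < tau ->
  (forall s j, a <= s <= b -> (1 <= j <= n)%nat -> crit_orbit j s <> 0) ->
  exists s, a < s < b /\ crit_orbit (S n) s <> 0.
Proof.
  intros Hab Hb Hn. apply NNPP. intros Hno.
  assert (Hz : forall s, a < s < b -> crit_orbit (S n) s = 0).
  { intros s Hs. apply NNPP. intros H. apply Hno. eauto. }
  (* at the midpoint [F s0] has prime period [S n], so the derivative of the orbit is nonzero *)
  set (s0 := (a + b) / 2).
  assert (Hs0 : Rabs s0 < tau) by (unfold s0; rewrite Rabs_right; lra).
  assert (HPP : prime_period (F s0) (S n)).
  { split; [lia|]. split; [apply Hz; unfold s0; lra|].
    intros q Hq1 Hq2. apply (Hn s0); [unfold s0; lra|lia]. }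
  assert (D := crit_orbit_derivative n s0 ltac:(lra)
                 ltac:(intros j Hj; apply Hn; [unfold s0; lra|lia])).
  assert (D0 : derivable_pt_lim (crit_orbit (S n)) s0 0).
  { intros e He. assert (Hm : 0 < Rmin (s0 - a) (b - s0)) by (apply Rmin_pos; unfold s0; lra).
    exists (mkposreal _ Hm). intros h Hh Hlt. simpl in Hlt.
    pose proof (Rmin_l (s0 - a) (b - s0)). pose proof (Rmin_r (s0 - a) (b - s0)).
    apply Rabs_def2 in Hlt.
    rewrite (Hz (s0 + h)), (Hz s0) by (unfold s0 in *; lra).
    replace ((0 - 0) / h - 0) with 0 by (field; exact Hh). rewrite Rabs_R0; lra. }
  pose proof (uniqueness_limite _ _ _ _ D D0) as E.
  apply Rmult_integral in E as [E|E]; [|exact (HJ s0 (S n) Hs0 HPP E)].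
  revert E. apply Dfn_neq0; [apply F_U1; lra|]. apply U1_maps_I; [apply F_U1; lra|lra].
Qed.

Lemma crit_orbit_nonzero_subinterval n a b : 0 < a < b -> b < tau ->
  (forall s j, a <= s <= b -> (1 <= j <= n)%nat -> crit_orbit j s <> 0) ->
  exists a' b', a <= a' < b' /\ b' <= b /\
    forall s j, a' <= s <= b' -> (1 <= j <= S n)%nat -> crit_orbit j s <> 0.
Proof.
  intros Hab Hb Hn.
  destruct (crit_orbit_not_identically_0 n a b Hab Hb Hn) as [s [Hs Hx]].
  assert (D := crit_orbit_derivative n s ltac:(rewrite Rabs_right; lra)
                 ltac:(intros j Hj; apply Hn; [lra|lia])).
  destruct (continuity_pt_eps _ _ (derivable_continuous_pt _ _ (exist _ _ D))
              (Rabs (crit_orbit (S n) s)) ltac:(now apply Rabs_pos_lt)) as [d [Hd K]].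
  exists (Rmax a (s - d / 2)), (Rmin b (s + d / 2)).
  pose proof (Rmax_l a (s - d / 2)). pose proof (Rmax_r a (s - d / 2)).
  pose proof (Rmin_l b (s + d / 2)). pose proof (Rmin_r b (s + d / 2)).
  split; [split; [lra|]|split; [lra|]].
  { unfold Rmax, Rmin. destruct (Rle_dec a _); destruct (Rle_dec b _); lra. }
  intros s' j Hs' Hj. destruct (Nat.eq_dec j (S n)) as [->|NE]; [|apply Hn; lra || lia].
  intro Z. specialize (K (s' - s) ltac:(apply Rabs_def1; lra)).
  replace (s + (s' - s)) with s' in K by ring.
  rewrite Z, Rminus_0_l, Rabs_Ropp in K. lra.
Qed.

Lemma nonperiodic_parameter_in_interval a0 b0 : 0 < a0 < b0 -> b0 < tau ->
  exists t, a0 <= t <= b0 /\ ~ periodic (F t).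
Proof.
  intros Hab Hb.
  set (P := fun n (ab : R * R) => a0 <= fst ab < snd ab /\ snd ab <= b0 /\
          forall s j, fst ab <= s <= snd ab -> (1 <= j <= n)%nat -> crit_orbit j s <> 0).
  assert (Hstep : forall x : nat * (R * R), exists ab', P (fst x) (snd x) ->
            P (S (fst x)) ab' /\ fst (snd x) <= fst ab' /\ snd ab' <= snd (snd x)).
  { intros [n [a b]]. simpl. destruct (classic (P n (a, b))) as [[H1 [H2 H3]]|Hn].
    - simpl in *. destruct (crit_orbit_nonzero_subinterval n a b ltac:(lra) ltac:(lra) H3)
        as [a' [b' [J1 [J2 J3]]]].
      exists (a', b'). intros _. unfold P; simpl. repeat split; auto; lra.
    - exists (a, b). intros H. contradiction. }
  destruct (choice _ Hstep) as [next Hnext].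
  set (iv := fix iv n := match n with O => (a0, b0) | S k => next (k, iv k) end).
  assert (Hiv : forall n, P n (iv n) /\ fst (iv n) <= fst (iv (S n)) /\ snd (iv (S n)) <= snd (iv n)).
  { assert (HP : forall n, P n (iv n)).
    { induction n as [|n IH].
      - unfold P. simpl. repeat split; try lra. intros; lia.
      - exact (proj1 (Hnext (n, iv n) IH)). }
    intros n. split; [exact (HP n)|exact (proj2 (Hnext (n, iv n) (HP n)))]. }
  assert (Hmono : forall m k, (m <= k)%nat -> fst (iv m) <= fst (iv k) /\ snd (iv k) <= snd (iv m)).
  { intros m k Hmk. induction k as [|k IH].
    - replace m with 0%nat by lia. lra.
    - destruct (Nat.eq_dec m (S k)) as [->|NE]; [lra|].
      destruct (IH ltac:(lia)). destruct (Hiv k) as [_ [H1 H2]]. lra. }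
  destruct (completeness (fun x => exists n, x = fst (iv n))) as [ts [Hub Hlub]].
  { exists b0. intros x [n ->]. destruct (Hiv n) as [[[_ H1] [H2 _]] _]. lra. }
  { exists (fst (iv 0%nat)). now exists 0%nat. }
  assert (Hin : forall n, fst (iv n) <= ts <= snd (iv n)).
  { intros n. split; [apply Hub; now exists n|].
    apply Hlub. intros x [m ->].
    destruct (Hmono m (max m n) ltac:(lia)). destruct (Hmono n (max m n) ltac:(lia)).
    destruct (Hiv (max m n)) as [[[_ HH] _] _]. lra. }
  exists ts. split.
  - destruct (Hin 0%nat) as [H1 H2]. simpl in H1, H2. lra.
  - intros [q [Hq Hz]]. destruct (Hiv q) as [[_ [_ K]] _].
    apply (K ts q (Hin q)); [lia|exact Hz].
Qed.

End NonPeriodic.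

Lemma nonperiodic_parameters_near_0 : periodic (F 0) -> good (F 0) -> J (F 0) (G 0) <> 0 ->
  forall eps, eps > 0 -> exists t, 0 < t < eps /\ Rabs t < delta /\ ~ periodic (F t).
Proof.
  intros Hper [Hn|[p [Hpp [_ Hgood]]]] HJ eps Heps; [contradiction|].
  rewrite (J_periodic _ _ _ Hpp) in HJ.
  destruct (perturbed_J_neq0 p Hpp Hgood HJ) as [tau [Htau HSH]].
  set (tau' := Rmin tau delta).
  assert (Htau' : 0 < tau' <= tau /\ tau' <= delta).
  { pose proof delta_pos. split; [split; [now apply Rmin_pos|apply Rmin_l]|apply Rmin_r]. }
  set (b0 := Rmin eps tau' / 2).
  assert (Hb0 : 0 < b0 /\ b0 < eps /\ b0 < tau').
  { assert (0 < Rmin eps tau') by (apply Rmin_pos; lra).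
    pose proof (Rmin_l eps tau'). pose proof (Rmin_r eps tau'). unfold b0; lra. }
  destruct (nonperiodic_parameter_in_interval tau' ltac:(lra)
              (fun t r Ht => HSH t r ltac:(lra)) (b0 / 2) b0 ltac:(lra) ltac:(lra))
    as [t [Ht Hnp]].
  exists t. split; [lra|]. split; [rewrite Rabs_right; lra|exact Hnp].
Qed.
End Family.

Theorem corollary4p1 (F G : R -> R -> R) (delta : R) :
  C1_family F G delta ->
  good (F 0) ->
  J (F 0) (G 0) <> 0 ->
  (periodic (F 0) ->
     exists tn : nat -> R, is_lim_seq tn 0 /\
       forall n, Rabs (tn n) < delta /\ ~ periodic (F (tn n))) /\
  (~ periodic (F 0) ->
     exists tn : nat -> R, is_lim_seq tn 0 /\
       forall n, Rabs (tn n) < delta /\ periodic (F (tn n))).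
Proof.
  intros HF Hgood HJ. split; intros Hper.
  - apply (seq_to_0_of_small_witnesses (fun t => Rabs t < delta /\ ~ periodic (F t))).
    exact (nonperiodic_parameters_near_0 F G delta HF Hper Hgood HJ).
  - apply (seq_to_0_of_small_witnesses (fun t => Rabs t < delta /\ periodic (F t))).
    exact (periodic_parameters_near_0 F G delta HF Hper HJ).
Qed.
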